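(* Let $N\ge1$, $\sigma\ge0$, and let $\psi:[0,2]\to[0,+\infty)$ be a decreasing $C^1$ function with $\psi(2)=0$ and $\psi'(2)<0$. Let $(x_i,v_i)_{i=1}^N$ be the solution of $$\dot x_i=v_i,\qquad \dot v_i=-\frac{\|v_i\|^2}{\|x_i\|^2}x_i+\sum_{j=1}^N\frac{\psi_{ij}}{N}\big(R(x_j,x_i)v_j-v_i\big)+\sum_{k=1}^N\frac{\sigma}{N}\big(\|x_i\|^2x_k-\langle x_i,x_k\rangle x_i\big),\quad \psi_{ij}=\psi(\|x_i-x_j\|),$$ with initial data satisfying $\|x_i(0)\|=1$, $\langle v_i(0),x_i(0)\rangle=0$ for all $i$. Assume $\psi_{ij}=\psi_{ji}$ and $x_i\ne-x_j$ for all $i,j\in\{1,\dots,N\}$. Then, with a positive constant $C$, $$\Big|\frac{d}{dt}\big\|R(x_j,x_i)v_j-v_i\big\|^2\Big|\le C\Big((N\mathcal{E}(0))^{3/2}+\frac{(N\mathcal{E}(0))^{3/2}}{\|x_i+x_j\|}+\max_{1\le l,k\le N}\psi_{lk}\,N\mathcal{E}(0)\Big).$$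
   Context: $\|\cdot\|$ is the Euclidean norm, $\langle\cdot,\cdot\rangle$ the inner product on $\mathbb{R}^3$. For column vectors $x_1,x_2$ in the unit sphere with $x_1\ne-x_2$, $R(x_1,x_2)=I$ if $x_1=x_2$, and otherwise $R(x_1,x_2)=\langle x_1,x_2\rangle I-x_1x_2^T+x_2x_1^T+(1-\langle x_1,x_2\rangle)uu^T$, $u=\frac{x_1\times x_2}{\|x_1\times x_2\|}$; in the system, $\psi_{ij}R(x_j,x_i)v_j$ is taken to be $0$ when $x_j=-x_i$. The energy is $\mathcal{E}=\frac1N\sum_{k=1}^N\|v_k\|^2+\frac{\sigma}{2N^2}\sum_{k,l=1}^N\|x_k-x_l\|^2$. *)

From Stdlib Require Import Reals Lra ClassicalDescription.
From Coquelicot Require Import Coquelicot.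
Open Scope R_scope.

Definition vec : Type := (R * R * R)%type.

Definition v1 (a : vec) : R := fst (fst a).
Definition v2 (a : vec) : R := snd (fst a).
Definition v3 (a : vec) : R := snd a.

Definition vzero : vec := (0, 0, 0).
Definition vadd (a b : vec) : vec := (v1 a + v1 b, v2 a + v2 b, v3 a + v3 b).
Definition vscal (r : R) (a : vec) : vec := (r * v1 a, r * v2 a, r * v3 a).
Definition vopp (a : vec) : vec := vscal (-1) a.
Definition vsub (a b : vec) : vec := vadd a (vopp b).

Definition dot (a b : vec) : R := v1 a * v1 b + v2 a * v2 b + v3 a * v3 b.
Definition vnorm (a : vec) : R := sqrt (dot a a).
Definition cross (a b : vec) : vec :=
  (v2 a * v3 b - v3 a * v2 b, v3 a * v1 b - v1 a * v3 b, v1 a * v2 b - v2 a * v1 b).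

(** [rot x1 x2 w] is R(x1,x2) w, i.e. the matrix
    R(x1,x2) = <x1,x2> I - x1 x2^T + x2 x1^T + (1 - <x1,x2>) u u^T,
    u = (x1 x x2)/||x1 x x2||, applied to w; R(x1,x1) = I.
    When x1 = -x2, [rot] returns 0 (the paper's convention that
    psi_ij R(x_j,x_i) v_j is taken to be 0 in that case). *)
Definition rot (x1 x2 w : vec) : vec :=
  if excluded_middle_informative (x1 = x2) then w
  else if excluded_middle_informative (x1 = vopp x2) then vzero
  else
    let c := dot x1 x2 in
    let u := vscal (/ vnorm (cross x1 x2)) (cross x1 x2) in
    vadd (vadd (vscal c w) (vscal (- dot x2 w) x1))
         (vadd (vscal (dot x1 w) x2) (vscal ((1 - c) * dot u w) u)).

Fixpoint vsum (f : nat -> vec) (n : nat) : vec :=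
  match n with O => vzero | S m => vadd (vsum f m) (f m) end.
Fixpoint rsum (f : nat -> R) (n : nat) : R :=
  match n with O => 0 | S m => rsum f m + f m end.
(** max_{k < n} f k  (for n >= 1; the seed 0 is harmless for nonnegative f). *)
Fixpoint rmaxn (f : nat -> R) (n : nat) : R :=
  match n with O => 0 | S O => f O | S m => Rmax (rmaxn f m) (f m) end.

Definition in02 (s : R) : Prop := 0 <= s <= 2.

Definition admissible_psi (psi : R -> R) : Prop :=
  exists dpsi : R -> R,
    (forall s, in02 s ->
       filterlim (fun r => (psi r - psi s) / (r - s))
                 (within (fun r => in02 r /\ r <> s) (locally s))
                 (locally (dpsi s))) /\
    (forall s, in02 s ->
       filterlim dpsi (within in02 (locally s)) (locally (dpsi s))) /\
    (forall s, in02 s -> 0 <= psi s) /\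
    (forall a b, in02 a -> in02 b -> a <= b -> psi b <= psi a) /\
    psi 2 = 0 /\ dpsi 2 < 0.

Definition psiij (psi : R -> R) (x : nat -> R -> vec) (i j : nat) (t : R) : R :=
  psi (vnorm (vsub (x i t) (x j t))).

Definition accel (N : nat) (sigma : R) (psi : R -> R)
    (x v : nat -> R -> vec) (i : nat) (t : R) : vec :=
  vadd
    (vscal (- (vnorm (v i t))^2 / (vnorm (x i t))^2) (x i t))
    (vadd
      (vsum (fun j => vscal (psiij psi x i j t / INR N)
                            (vsub (rot (x j t) (x i t) (v j t)) (v i t))) N)
      (vsum (fun k => vscal (sigma / INR N)
                            (vsub (vscal ((vnorm (x i t))^2) (x k t))
                                  (vscal (dot (x i t) (x k t)) (x i t)))) N)).

(** (x,v) is a solution on [0,+oo): the ODE holds for t > 0 and the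
    trajectories are right-continuous at 0 (so the initial data are attained). *)
Definition is_solution (N : nat) (sigma : R) (psi : R -> R)
    (x v : nat -> R -> vec) : Prop :=
  forall i, (i < N)%nat ->
    (forall t, 0 < t ->
       is_derive (x i) t (v i t) /\
       is_derive (v i) t (accel N sigma psi x v i t)) /\
    filterlim (x i) (at_right 0) (locally (x i 0)) /\
    filterlim (v i) (at_right 0) (locally (v i 0)).

Definition energy (N : nat) (sigma : R) (x v : nat -> R -> vec) (t : R) : R :=
  / INR N * rsum (fun k => (vnorm (v k t))^2) N
  + sigma / (2 * (INR N)^2)
    * rsum (fun k => rsum (fun l => (vnorm (vsub (x k t) (x l t)))^2) N) N.

Definition maxpsi (N : nat) (psi : R -> R) (x : nat -> R -> vec) (t : R) : R :=
  rmaxn (fun l => rmaxn (fun k => psiij psi x l k t) N) N.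

Definition misalign (x v : nat -> R -> vec) (i j : nat) (s : R) : R :=
  (vnorm (vsub (rot (x j s) (x i s) (v j s)) (v i s)))^2.

(** Along the flow the constraints |x_i| = 1 and <x_i, v_i> = 0 persist: the defect
    sum_i <x_i,v_i>^2 + (|x_i|^2 - 1)^2 obeys a linear differential inequality near any time
    where it vanishes, so by Gronwall and a continuation argument it vanishes for all t >= 0.
    On the sphere R(x_j,x_i) is an isometry, so with psi_ij = psi_ji the alignment force
    dissipates energy; hence |v_k|^2 <= N E(0), and the sigma-force is of size
    sqrt(2 sigma N E(0)), which is absorbed into max psi * N E(0) since max psi >= psi(0) > 0.
    Away from antipodal points
      R(y,x) w = <y,x> w - <x,w> y + <y,w> x + <y × x, w> / (1 + <y,x>) (y × x),
    and differentiating D = R(x_j,x_i) v_j - v_i along the flow gives terms of size |v|^2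
    and terms with a factor 1 / (1 + <x_i,x_j>) = 2 / |x_i + x_j|^2; since
    |x_i × x_j| <= |x_i + x_j| the latter are O(|v|^2 / |x_i + x_j|). The centripetal terms
    drop out because D is tangent at x_i. *)

From Stdlib Require Import Reals.
From Coquelicot Require Import Coquelicot.
From Stdlib Require Import Lra Lia Psatz ClassicalDescription FunctionalExtensionality Classical.
Open Scope R_scope.

(** * Vectors of R^3 and finite sums *)

Ltac destruct_vecs :=
  repeat match goal with v := _ : vec |- _ => subst v end;
  repeat match goal with
  | v : vec |- _ =>
      let a := fresh "a" in let b := fresh "b" in let c := fresh "c" in
      destruct v as [[a b] c]
  end.
Ltac unfold_vec := cbv [dot vadd vscal vsub vopp cross v1 v2 v3 vzero fst snd] in *.
Ltac vec_ring := destruct_vecs; unfold_vec; ring.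
Ltac vec_ext tac :=
  destruct_vecs; unfold_vec; repeat (apply pair_equal_spec; split); tac.

Lemma dot_comm a b : dot a b = dot b a.
Proof. vec_ring. Qed.

Lemma dot_add_r a b c : dot a (vadd b c) = dot a b + dot a c.
Proof. vec_ring. Qed.

Lemma dot_sub_r a b c : dot a (vsub b c) = dot a b - dot a c.
Proof. vec_ring. Qed.

Lemma dot_scal_r a r b : dot a (vscal r b) = r * dot a b.
Proof. vec_ring. Qed.

Lemma dot_self_ge0 a : 0 <= dot a a.
Proof. destruct_vecs; unfold_vec; nra. Qed.

Lemma dot_self_eq0 a : dot a a = 0 -> a = vzero.
Proof.
  destruct_vecs; unfold_vec; intros H.
  assert (a0 = 0) by nra; assert (b = 0) by nra; assert (c = 0) by nra.
  now subst.
Qed.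

Lemma vadd_eq0 a b : vadd a b = vzero -> a = vopp b.
Proof. destruct_vecs; unfold_vec. intros H. inversion H. f_equal; [f_equal|]; lra. Qed.

Lemma vsub_eq0 a b : vsub a b = vzero -> a = b.
Proof. destruct_vecs; unfold_vec. intros H. inversion H. f_equal; [f_equal|]; lra. Qed.

Lemma dot_sub_self a b : dot (vsub a b) (vsub a b) = dot a a - 2 * dot a b + dot b b.
Proof. vec_ring. Qed.

Lemma dot_add_self a b : dot (vadd a b) (vadd a b) = dot a a + 2 * dot a b + dot b b.
Proof. vec_ring. Qed.

Lemma lagrange_identity a b :
  dot (cross a b) (cross a b) = dot a a * dot b b - (dot a b)^2.
Proof. vec_ring. Qed.

Lemma vnorm_ge0 a : 0 <= vnorm a.
Proof. apply sqrt_pos. Qed.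

Lemma vnorm_pow2 a : vnorm a ^ 2 = dot a a.
Proof. apply pow2_sqrt, dot_self_ge0. Qed.

Lemma vnorm_mul_self a : vnorm a * vnorm a = dot a a.
Proof. apply sqrt_sqrt, dot_self_ge0. Qed.

Lemma vnorm_unit a : dot a a = 1 -> vnorm a = 1.
Proof. intros H. unfold vnorm. rewrite H. apply sqrt_1. Qed.

Lemma sqrt_le_of_le_pow2 x B : 0 <= B -> x <= B^2 -> sqrt x <= B.
Proof.
  intros HB H. rewrite <- (sqrt_pow2 B HB).
  destruct (Rle_lt_dec 0 x).
  - apply sqrt_le_1; lra || nra.
  - rewrite (sqrt_neg_0 x) by lra. apply sqrt_pos.
Qed.

Lemma vnorm_le a B : 0 <= B -> dot a a <= B^2 -> vnorm a <= B.
Proof. apply sqrt_le_of_le_pow2. Qed.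

Lemma cauchy_schwarz_pow2 a b : (dot a b)^2 <= dot a a * dot b b.
Proof. pose proof (lagrange_identity a b); pose proof (dot_self_ge0 (cross a b)); lra. Qed.

Lemma cauchy_schwarz a b : Rabs (dot a b) <= vnorm a * vnorm b.
Proof.
  pose proof (cauchy_schwarz_pow2 a b).
  pose proof (vnorm_ge0 a); pose proof (vnorm_ge0 b).
  apply Rsqr_incr_0_var; [|nra]. rewrite <- Rsqr_abs. unfold Rsqr.
  replace (vnorm a * vnorm b * (vnorm a * vnorm b))
    with ((vnorm a * vnorm a) * (vnorm b * vnorm b)) by ring.
  rewrite !vnorm_mul_self. nra.
Qed.

Lemma Rabs_dot_le a b A B : vnorm a <= A -> vnorm b <= B -> Rabs (dot a b) <= A * B.
Proof.
  intros. pose proof (cauchy_schwarz a b).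
  pose proof (vnorm_ge0 a); pose proof (vnorm_ge0 b).
  assert (vnorm a * vnorm b <= A * B) by (apply Rmult_le_compat; lra). lra.
Qed.

Lemma vnorm_add a b : vnorm (vadd a b) <= vnorm a + vnorm b.
Proof.
  pose proof (vnorm_ge0 a); pose proof (vnorm_ge0 b).
  apply vnorm_le; [lra|]. rewrite dot_add_self.
  pose proof (Rle_abs (dot a b)); pose proof (cauchy_schwarz a b).
  rewrite <- !vnorm_mul_self. nra.
Qed.

Lemma vnorm_add_le a b A B : vnorm a <= A -> vnorm b <= B -> vnorm (vadd a b) <= A + B.
Proof. pose proof (vnorm_add a b). lra. Qed.

Lemma vnorm_scal r a : vnorm (vscal r a) = Rabs r * vnorm a.
Proof.
  unfold vnorm.
  replace (dot (vscal r a) (vscal r a)) with (r^2 * dot a a) by vec_ring.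
  rewrite sqrt_mult by (nra || apply dot_self_ge0).
  rewrite <- sqrt_Rsqr_abs. unfold Rsqr. do 2 f_equal. ring.
Qed.

Lemma vnorm_sub a b : vnorm (vsub a b) <= vnorm a + vnorm b.
Proof.
  unfold vsub, vopp. pose proof (vnorm_add a (vscal (-1) b)).
  rewrite vnorm_scal in H.
  replace (Rabs (-1)) with 1 in H by (rewrite Rabs_left; lra). lra.
Qed.

Lemma vnorm_cross a b : vnorm (cross a b) <= vnorm a * vnorm b.
Proof.
  pose proof (vnorm_ge0 a); pose proof (vnorm_ge0 b).
  apply vnorm_le; [nra|]. rewrite lagrange_identity.
  replace ((vnorm a * vnorm b)^2) with ((vnorm a * vnorm a) * (vnorm b * vnorm b)) by ring.
  rewrite !vnorm_mul_self. pose proof (pow2_ge_0 (dot a b)). lra.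
Qed.

Lemma dot_vsum_r a f n : dot a (vsum f n) = rsum (fun k => dot a (f k)) n.
Proof. induction n; simpl. - unfold_vec; ring. - now rewrite dot_add_r, IHn. Qed.

Lemma vnorm_vsum f n : vnorm (vsum f n) <= rsum (fun k => vnorm (f k)) n.
Proof.
  induction n; simpl.
  - unfold vnorm. replace (dot vzero vzero) with 0 by (unfold_vec; ring).
    rewrite sqrt_0; lra.
  - pose proof (vnorm_add (vsum f n) (f n)). lra.
Qed.

Lemma Rabs_add3_sub2_le a b c d e :
  Rabs (a + b + c - d - e) <= Rabs a + Rabs b + Rabs c + Rabs d + Rabs e.
Proof.
  unfold Rminus.
  pose proof (Rabs_triang (a + b + c + - d) (- e)). pose proof (Rabs_triang (a + b + c) (- d)).
  pose proof (Rabs_triang (a + b) c). pose proof (Rabs_triang a b).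
  rewrite Rabs_Ropp in *. lra.
Qed.

Lemma mul_le_of_bounds p P a A : 0 <= p <= P -> a <= A -> 0 <= A -> p * a <= P * A.
Proof.
  intros Hp Ha HA. destruct (Rle_lt_dec 0 a).
  - apply Rmult_le_compat; lra.
  - assert (p * a <= 0) by (rewrite <- (Rmult_0_r p); apply Rmult_le_compat_l; lra).
    assert (0 <= P * A) by (apply Rmult_le_pos; lra). lra.
Qed.

Lemma rsum_ext f g n : (forall k, (k < n)%nat -> f k = g k) -> rsum f n = rsum g n.
Proof. induction n; simpl; intros H; auto. rewrite IHn, H; auto. Qed.

Lemma rsum_le f g n : (forall k, (k < n)%nat -> f k <= g k) -> rsum f n <= rsum g n.
Proof.
  induction n; simpl; intros H; [lra|].
  pose proof (IHn (fun k Hk => H k (Nat.lt_lt_succ_r _ _ Hk))).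
  pose proof (H n (Nat.lt_succ_diag_r n)). lra.
Qed.

Lemma rsum_plus f g n : rsum (fun k => f k + g k) n = rsum f n + rsum g n.
Proof. induction n; simpl; [ring|]. rewrite IHn. ring. Qed.

Lemma rsum_minus f g n : rsum (fun k => f k - g k) n = rsum f n - rsum g n.
Proof. induction n; simpl; [ring|]. rewrite IHn. ring. Qed.

Lemma rsum_scal c f n : rsum (fun k => c * f k) n = c * rsum f n.
Proof. induction n; simpl; [ring|]. rewrite IHn. ring. Qed.

Lemma rsum_const c n : rsum (fun _ => c) n = INR n * c.
Proof. induction n; simpl rsum; [simpl; ring|]. rewrite IHn, S_INR. ring. Qed.

Lemma rsum_nonneg f n : (forall k, (k < n)%nat -> 0 <= f k) -> 0 <= rsum f n.
Proof.
  intros H. replace 0 with (rsum (fun _ => 0) n) by (rewrite rsum_const; ring).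
  now apply rsum_le.
Qed.

Lemma rsum_ge_term f n k :
  (forall k, (k < n)%nat -> 0 <= f k) -> (k < n)%nat -> f k <= rsum f n.
Proof.
  induction n; simpl; intros H Hk; [lia|].
  assert (0 <= rsum f n) by (apply rsum_nonneg; intros; apply H; lia).
  destruct (Nat.eq_dec k n) as [->|Hne]; [lra|].
  assert (f k <= rsum f n) by (apply IHn; [intros; apply H|]; lia).
  pose proof (H n ltac:(lia)). lra.
Qed.

Lemma rsum_swap f n m :
  rsum (fun k => rsum (fun l => f k l) m) n = rsum (fun l => rsum (fun k => f k l) n) m.
Proof.
  induction n; simpl.
  - rewrite rsum_const. ring.
  - now rewrite IHn, <- rsum_plus.
Qed.

Lemma rsum_pow2_le f n : (rsum f n)^2 <= INR n * rsum (fun k => f k ^ 2) n.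
Proof.
  induction n; cbn [rsum]; [simpl; lra|]. rewrite S_INR.
  assert (Hcross : 2 * f n * rsum f n <= INR n * f n ^ 2 + rsum (fun k => f k ^ 2) n).
  { assert (rsum (fun k => 2 * f n * f k) n <= rsum (fun k => f n ^ 2 + f k ^ 2) n).
    { apply rsum_le. intros k _. pose proof (pow2_ge_0 (f n - f k)). nra. }
    rewrite rsum_scal, rsum_plus, rsum_const in H. lra. }
  nra.
Qed.

Lemma rmaxn_ge (f : nat -> R) n k : (k < n)%nat -> f k <= rmaxn f n.
Proof.
  induction n as [|m IH]; intros Hk; [lia|].
  destruct m as [|m'].
  - replace k with 0%nat by lia. simpl. lra.
  - change (rmaxn f (S (S m'))) with (Rmax (rmaxn f (S m')) (f (S m'))).
    destruct (Nat.eq_dec k (S m')) as [->|]; [apply Rmax_r|].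
    eapply Rle_trans; [apply IH; lia | apply Rmax_l].
Qed.

(** * Derivatives and limits *)

(* Coquelicot states these rules for the abstract [plus] and [mult], which [apply]
   does not unify with [Rplus] and [Rmult]. *)
Lemma is_derive_Rplus (f g : R -> R) (t a b : R) :
  is_derive f t a -> is_derive g t b -> is_derive (fun s => f s + g s) t (a + b).
Proof. apply (is_derive_plus f g t a b). Qed.

Lemma is_derive_Rminus (f g : R -> R) (t a b : R) :
  is_derive f t a -> is_derive g t b -> is_derive (fun s => f s - g s) t (a - b).
Proof. apply (is_derive_minus f g t a b). Qed.

Lemma is_derive_Ropp (f : R -> R) (t a : R) : is_derive f t a -> is_derive (fun s => - f s) t (- a).
Proof. apply (is_derive_opp f t a). Qed.

Lemma is_derive_Rmult (f g : R -> R) (t a b : R) :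
  is_derive f t a -> is_derive g t b ->
  is_derive (fun s => f s * g s) t (a * g t + f t * b).
Proof. intros. apply (is_derive_mult f g t a b); auto. intros; apply Rmult_comm. Qed.

Lemma is_derive_Rinv (f : R -> R) (t a : R) :
  is_derive f t a -> f t <> 0 -> is_derive (fun s => / f s) t (- a / (f t)^2).
Proof. apply is_derive_inv. Qed.

Lemma is_derive_Rconst (c t : R) : is_derive (fun _ => c) t 0.
Proof. apply (is_derive_const c t). Qed.

Lemma is_derive_value (f : R -> R) (t a b : R) : is_derive f t a -> a = b -> is_derive f t b.
Proof. now intros ? <-. Qed.

Lemma is_derive_rsum (f : nat -> R -> R) (df : nat -> R) n (s : R) :
  (forall k, (k < n)%nat -> is_derive (f k) s (df k)) ->
  is_derive (fun s => rsum (fun k => f k s) n) s (rsum df n).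
Proof.
  induction n; simpl; intros H.
  - apply is_derive_Rconst.
  - apply is_derive_Rplus; auto.
Qed.

Lemma is_derive_exp_scal (K t : R) :
  is_derive (fun s => exp (K * s)) t (K * exp (K * t)).
Proof.
  eapply is_derive_value.
  - apply (is_derive_comp exp (fun s => K * s)); [apply is_derive_exp|].
    apply (is_derive_Rmult (fun _ => K) (fun s => s)); [apply is_derive_Rconst | apply is_derive_id].
  - change ((0 * t + K * 1) * exp (K * t) = K * exp (K * t)). ring.
Qed.

Definition is_derive_vec (f : R -> vec) (t : R) (l : vec) : Prop :=
  is_derive (fun s => v1 (f s)) t (v1 l) /\ is_derive (fun s => v2 (f s)) t (v2 l) /\
  is_derive (fun s => v3 (f s)) t (v3 l).

Lemma is_derive_vec_of (f : R -> vec) t l : is_derive f t l -> is_derive_vec f t l.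
Proof.
  intros H. unfold is_derive_vec, v1, v2, v3, is_derive.
  split; [|split]; eapply filterdiff_ext_lin;
    try (eapply filterdiff_comp; [eapply filterdiff_comp; [exact H|]|]);
    try (eapply filterdiff_comp; [exact H|]);
    solve [ apply filterdiff_linear, is_linear_fst
          | apply filterdiff_linear, is_linear_snd
          | intros; reflexivity ].
Qed.

Lemma is_derive_vec_value f t a b : is_derive_vec f t a -> a = b -> is_derive_vec f t b.
Proof. now intros ? <-. Qed.

Lemma is_derive_dot f g t f' g' :
  is_derive_vec f t f' -> is_derive_vec g t g' ->
  is_derive (fun s => dot (f s) (g s)) t (dot f' (g t) + dot (f t) g').
Proof.
  intros [F1 [F2 F3]] [G1 [G2 G3]]. unfold dot.
  eapply is_derive_value.
  - apply is_derive_Rplus; [apply is_derive_Rplus|]; apply is_derive_Rmult; eauto.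
  - cbv beta; ring.
Qed.

Lemma is_derive_vec_add f g t a b :
  is_derive_vec f t a -> is_derive_vec g t b ->
  is_derive_vec (fun s => vadd (f s) (g s)) t (vadd a b).
Proof.
  intros [F1 [F2 F3]] [G1 [G2 G3]]. unfold is_derive_vec, vadd, v1, v2, v3 in *; simpl in *.
  split; [|split]; apply is_derive_Rplus; auto.
Qed.

Lemma is_derive_vec_sub f g t a b :
  is_derive_vec f t a -> is_derive_vec g t b ->
  is_derive_vec (fun s => vsub (f s) (g s)) t (vsub a b).
Proof.
  intros [F1 [F2 F3]] [G1 [G2 G3]]. unfold is_derive_vec, vsub, vopp, vadd, vscal, v1, v2, v3 in *; simpl in *.
  split; [|split]; (eapply is_derive_value;
    [apply is_derive_Rplus; [eauto | apply is_derive_Rmult; [apply is_derive_Rconst | eauto]] | cbv beta; ring]).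
Qed.

Lemma is_derive_vec_scal r f t r' a :
  is_derive r t r' -> is_derive_vec f t a ->
  is_derive_vec (fun s => vscal (r s) (f s)) t (vadd (vscal r' (f t)) (vscal (r t) a)).
Proof.
  intros Hr [F1 [F2 F3]]. unfold is_derive_vec, vadd, vscal, v1, v2, v3 in *; simpl in *.
  split; [|split]; apply is_derive_Rmult; auto.
Qed.

Lemma is_derive_vec_cross f g t a b :
  is_derive_vec f t a -> is_derive_vec g t b ->
  is_derive_vec (fun s => cross (f s) (g s)) t (vadd (cross a (g t)) (cross (f t) b)).
Proof.
  intros [F1 [F2 F3]] [G1 [G2 G3]]. unfold is_derive_vec, cross, vadd, v1, v2, v3 in *; simpl in *.
  split; [|split]; (eapply is_derive_value; [apply is_derive_Rminus; apply is_derive_Rmult; eauto | cbv beta; ring]).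
Qed.

Lemma ball_Rabs (x e y : R) : ball x e y <-> Rabs (y - x) < e.
Proof. reflexivity. Qed.

Section FilterLimits.
Context {T : Type} {F : (T -> Prop) -> Prop} {FF : Filter F}.

Lemma filterlim_Rplus (f g : T -> R) a b :
  filterlim f F (locally a) -> filterlim g F (locally b) ->
  filterlim (fun s => f s + g s) F (locally (a + b)).
Proof. intros. eapply (filterlim_comp_2 f g Rplus); eauto. apply (filterlim_plus a b). Qed.

Lemma filterlim_Rmult (f g : T -> R) a b :
  filterlim f F (locally a) -> filterlim g F (locally b) ->
  filterlim (fun s => f s * g s) F (locally (a * b)).
Proof. intros. eapply (filterlim_comp_2 f g Rmult); eauto. apply (filterlim_mult a b). Qed.

Lemma filterlim_Rminus (f g : T -> R) a b :
  filterlim f F (locally a) -> filterlim g F (locally b) ->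
  filterlim (fun s => f s - g s) F (locally (a - b)).
Proof.
  intros Hf Hg. unfold Rminus. apply filterlim_Rplus; auto.
  replace (fun s => - g s) with (fun s => (-1) * g s)
    by (apply functional_extensionality; intros; ring).
  replace (- b) with ((-1) * b) by ring.
  apply filterlim_Rmult; auto. apply filterlim_const.
Qed.

Lemma filterlim_v1 (f : T -> vec) a :
  filterlim f F (locally a) -> filterlim (fun s => v1 (f s)) F (locally (v1 a)).
Proof.
  intros H. unfold v1. eapply filterlim_comp; [eapply filterlim_comp; [exact H|]|].
  - apply (linear_cont (fun p : prod_NormedModule R_AbsRing
      (prod_NormedModule R_AbsRing R_NormedModule R_NormedModule) R_NormedModule => fst p)).
    apply is_linear_fst.
  - apply (linear_cont (fun p : prod_NormedModule R_AbsRing R_NormedModule R_NormedModule => fst p)).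
    apply is_linear_fst.
Qed.

Lemma filterlim_v2 (f : T -> vec) a :
  filterlim f F (locally a) -> filterlim (fun s => v2 (f s)) F (locally (v2 a)).
Proof.
  intros H. unfold v2. eapply filterlim_comp; [eapply filterlim_comp; [exact H|]|].
  - apply (linear_cont (fun p : prod_NormedModule R_AbsRing
      (prod_NormedModule R_AbsRing R_NormedModule R_NormedModule) R_NormedModule => fst p)).
    apply is_linear_fst.
  - apply (linear_cont (fun p : prod_NormedModule R_AbsRing R_NormedModule R_NormedModule => snd p)).
    apply is_linear_snd.
Qed.

Lemma filterlim_v3 (f : T -> vec) a :
  filterlim f F (locally a) -> filterlim (fun s => v3 (f s)) F (locally (v3 a)).
Proof.
  intros H. unfold v3. eapply filterlim_comp; [exact H|].
  apply (linear_cont (fun p : prod_NormedModule R_AbsRing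
    (prod_NormedModule R_AbsRing R_NormedModule R_NormedModule) R_NormedModule => snd p)).
  apply is_linear_snd.
Qed.

Lemma filterlim_dot (f g : T -> vec) a b :
  filterlim f F (locally a) -> filterlim g F (locally b) ->
  filterlim (fun s => dot (f s) (g s)) F (locally (dot a b)).
Proof.
  intros. unfold dot.
  repeat apply filterlim_Rplus; apply filterlim_Rmult;
    first [apply filterlim_v1 | apply filterlim_v2 | apply filterlim_v3]; auto.
Qed.

Lemma filterlim_rsum (f : nat -> T -> R) (a : nat -> R) n :
  (forall k, (k < n)%nat -> filterlim (f k) F (locally (a k))) ->
  filterlim (fun s => rsum (fun k => f k s) n) F (locally (rsum a n)).
Proof.
  induction n; simpl; intros H.
  - apply filterlim_const.
  - apply filterlim_Rplus; auto.
Qed.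

Lemma filter_forall_lt (P : nat -> T -> Prop) n :
  (forall k, (k < n)%nat -> F (P k)) -> F (fun s => forall k, (k < n)%nat -> P k s).
Proof.
  induction n; intros H.
  - apply filter_forall. intros; lia.
  - eapply filter_imp; [| apply filter_and; [apply IHn; intros; apply H; lia | apply (H n); lia]].
    intros s [H1 H2] k Hk. destruct (Nat.eq_dec k n) as [->|]; auto. apply H1; lia.
Qed.

Lemma filterlim_lt_eventually (g : T -> R) (l c : R) :
  filterlim g F (locally l) -> l < c -> F (fun s => g s < c).
Proof.
  intros H Hl. assert (He : 0 < c - l) by lra.
  eapply filter_imp; [| apply H; apply (locally_ball l (mkposreal _ He))].
  intros s Hs. apply ball_Rabs, Rabs_def2 in Hs.
  unfold minus, plus, opp in Hs; simpl in Hs. lra.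
Qed.

Lemma filterlim_gt_eventually (g : T -> R) (l c : R) :
  filterlim g F (locally l) -> c < l -> F (fun s => c < g s).
Proof.
  intros H Hl. assert (He : 0 < l - c) by lra.
  eapply filter_imp; [| apply H; apply (locally_ball l (mkposreal _ He))].
  intros s Hs. apply ball_Rabs, Rabs_def2 in Hs.
  unfold minus, plus, opp in Hs; simpl in Hs. lra.
Qed.

End FilterLimits.

(** * Monotonicity, Gronwall and continuation *)

Lemma locally_Rabs (P : R -> Prop) a :
  locally a P -> exists d, 0 < d /\ forall s, Rabs (s - a) < d -> P s.
Proof. intros [eps H]. exists eps. split; [apply cond_pos|]. intros s Hs. now apply H. Qed.

Lemma at_right_interval (P : R -> Prop) a :
  at_right a P -> exists d, 0 < d /\ forall s, a < s < a + d -> P s.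
Proof.
  intros H. apply locally_Rabs in H. destruct H as [d [Hd H]]. exists d. split; auto.
  intros s Hs. apply H; [rewrite Rabs_right|]; lra.
Qed.

Lemma is_derive_continuous (f : R -> R) (s d : R) :
  is_derive f s d -> filterlim f (locally s) (locally (f s)).
Proof. intros H. apply (ex_derive_continuous f s). now exists d. Qed.

Lemma le_of_derive_nonpos (f : R -> R) a b :
  (forall s, a < s < b -> exists d, is_derive f s d /\ d <= 0) ->
  filterlim f (at_right a) (locally (f a)) -> forall s, a < s < b -> f s <= f a.
Proof.
  intros Hd Hc s Hs.
  assert (Hmono : forall u, a < u < s -> f s <= f u).
  { intros u Hu.
    destruct (MVT_gen f u s (Derive f)) as [c [Hc1 Hc2]];
      rewrite ?Rmin_left, ?Rmax_right in * by lra.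
    - intros y Hy. destruct (Hd y ltac:(lra)) as [d [H1 _]].
      now rewrite (is_derive_unique f y d H1).
    - intros y Hy. destruct (Hd y ltac:(lra)) as [d [H1 _]].
      apply continuity_pt_filterlim. eapply is_derive_continuous; eauto.
    - destruct (Hd c ltac:(lra)) as [d [H1 H2]].
      rewrite (is_derive_unique f c d H1) in Hc2. nra. }
  destruct (Rle_lt_dec (f s) (f a)) as [|Hlt]; auto. exfalso.
  assert (Hev : at_right a (fun u => f u < f s)) by (apply (filterlim_lt_eventually f (f a)); auto).
  apply at_right_interval in Hev. destruct Hev as [d [Hd0 Hev]].
  set (u := a + Rmin (d/2) ((s - a)/2)).
  assert (a < u < s /\ u < a + d).
  { unfold u. pose proof (Rmin_l (d/2) ((s-a)/2)). pose proof (Rmin_r (d/2) ((s-a)/2)).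
    assert (0 < Rmin (d/2) ((s-a)/2)) by (apply Rmin_glb_lt; lra). lra. }
  specialize (Hev u ltac:(lra)). specialize (Hmono u ltac:(lra)). lra.
Qed.

Lemma gronwall_zero (Q : R -> R) (K T d : R) :
  Q T = 0 -> filterlim Q (at_right T) (locally (Q T)) ->
  (forall s, T < s < T + d -> 0 <= Q s /\ exists dQ, is_derive Q s dQ /\ dQ <= K * Q s) ->
  forall s, T < s < T + d -> Q s = 0.
Proof.
  intros HQT Hc Hd.
  set (G := fun s => Q s * exp (- K * s)).
  assert (HG : forall s, T < s < T + d -> G s <= G T).
  { apply le_of_derive_nonpos.
    - intros s Hs. destruct (Hd s Hs) as [_ [dQ [HdQ Hle]]].
      eexists. split.
      + apply (is_derive_Rmult Q (fun s => exp (- K * s))); [exact HdQ | apply is_derive_exp_scal].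
      + pose proof (exp_pos (- K * s)). nra.
    - apply (filterlim_Rmult Q (fun s => exp (- K * s))); auto.
      eapply filterlim_filter_le_1; [apply filter_le_within|].
      apply (is_derive_continuous _ _ _ (is_derive_exp_scal (- K) T)). }
  intros s Hs. specialize (HG s Hs). destruct (Hd s Hs) as [HQ _].
  unfold G in HG. rewrite HQT, Rmult_0_l in HG.
  pose proof (exp_pos (- K * s)). nra.
Qed.

Lemma eq0_of_eq0_before (Q : R -> R) T :
  0 < T -> filterlim Q (locally T) (locally (Q T)) ->
  (forall s, 0 <= s < T -> Q s = 0) -> Q T = 0.
Proof.
  intros HT HcT Hbefore. apply NNPP. intros Hq.
  assert (Hev : locally T (fun s => Q s <> 0)).
  { destruct (Rlt_or_le 0 (Q T)).
    - eapply filter_imp; [|apply (filterlim_gt_eventually Q (Q T) 0); auto; lra]. intros; lra.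
    - eapply filter_imp; [|apply (filterlim_lt_eventually Q (Q T) 0); auto; lra]. intros; lra. }
  apply locally_Rabs in Hev. destruct Hev as [d [Hd Hev]].
  set (s := T - Rmin (d/2) (T/2)).
  assert (0 < Rmin (d/2) (T/2)) by (apply Rmin_glb_lt; lra).
  pose proof (Rmin_l (d/2) (T/2)). pose proof (Rmin_r (d/2) (T/2)).
  apply (Hev s); [unfold s; rewrite Rabs_left; lra|].
  apply Hbefore. unfold s; lra.
Qed.

(** The supremum [T] of the times up to which [Q] vanishes cannot be finite. *)
Lemma vanishing_by_continuation (Q : R -> R) :
  Q 0 = 0 ->
  (forall T, 0 < T -> filterlim Q (locally T) (locally (Q T))) ->
  (forall T, 0 <= T -> Q T = 0 -> exists d, 0 < d /\ forall s, T < s < T + d -> Q s = 0) ->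
  forall s, 0 <= s -> Q s = 0.
Proof.
  intros HQ0 Hcont Hext.
  apply NNPP. intros Hn. apply not_all_ex_not in Hn. destruct Hn as [r0 Hr0].
  apply imply_to_and in Hr0. destruct Hr0 as [Hr0 Hr0'].
  set (E := fun r => 0 <= r /\ forall s, 0 <= s <= r -> Q s = 0).
  assert (Hbd : forall r, E r -> r < r0).
  { intros r [Hr Hg]. destruct (Rlt_le_dec r r0); auto. exfalso. apply Hr0', Hg. lra. }
  assert (HE0 : E 0) by (split; [lra | intros s Hs; now replace s with 0 by lra]).
  destruct (completeness E) as [T [HT1 HT2]].
  { exists r0. intros r Hr. left. now apply Hbd. }
  { now exists 0. }
  assert (T0 : 0 <= T) by now apply HT1.
  assert (Hbefore : forall s, 0 <= s < T -> Q s = 0).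
  { intros s Hs. apply NNPP. intros Hq.
    assert (is_upper_bound E s).
    { intros r [Hr Hg]. destruct (Rle_lt_dec r s); auto. exfalso. apply Hq, Hg. lra. }
    specialize (HT2 s H). lra. }
  assert (QT : Q T = 0).
  { destruct (Req_dec T 0) as [->|HT0]; auto.
    apply eq0_of_eq0_before; auto; [lra|]. apply Hcont. lra. }
  destruct (Hext T T0 QT) as [d [Hd Hafter]].
  assert (E (T + d/2)).
  { split; [lra|]. intros s Hs. destruct (Rlt_le_dec s T); [apply Hbefore; lra|].
    destruct (Req_dec s T) as [->|]; auto. apply Hafter. lra. }
  specialize (HT1 _ H). lra.
Qed.

(** * The rotation R(y, x) *)

(** On the unit sphere [(1 - c) u u^T = k k^T / (1 + c)] with [c = <y,x>], [k = y × x],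
    so this expression of [R(y,x)] is smooth away from [y = -x]. *)
Definition rot_formula (y x w : vec) : vec :=
  vadd (vadd (vscal (dot y x) w) (vscal (- dot x w) y))
       (vadd (vscal (dot y w) x) (vscal (dot (cross y x) w / (1 + dot y x)) (cross y x))).

(** The derivative of [rot_formula y x w] in the base points along [(y', x')]; the singular
    part collects the terms carrying a factor [1 / (1 + <y,x>)]. *)
Definition drot_regular (y x w y' x' : vec) : vec :=
  vadd (vadd (vscal (dot y' x + dot y x') w) (vscal (- dot x' w) y))
       (vadd (vadd (vscal (- dot x w) y') (vscal (dot y' w) x)) (vscal (dot y w) x')).

Definition drot_singular (y x w y' x' : vec) : vec :=
  vadd (vscal (dot (vadd (cross y' x) (cross y x')) w / (1 + dot y x)) (cross y x))
       (vadd (vscal (- (dot (cross y x) w * (dot y' x + dot y x')) / (1 + dot y x)^2) (cross y x))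
             (vscal (dot (cross y x) w / (1 + dot y x)) (vadd (cross y' x) (cross y x')))).

Lemma rot_formula_derive Y X W t y' x' w' :
  is_derive_vec Y t y' -> is_derive_vec X t x' -> is_derive_vec W t w' ->
  1 + dot (Y t) (X t) <> 0 ->
  is_derive_vec (fun s => rot_formula (Y s) (X s) (W s)) t
    (vadd (rot_formula (Y t) (X t) w')
          (vadd (drot_regular (Y t) (X t) (W t) y' x') (drot_singular (Y t) (X t) (W t) y' x'))).
Proof.
  intros HY HX HW Hc. unfold rot_formula.
  eapply is_derive_vec_value.
  - apply is_derive_vec_add; apply is_derive_vec_add.
    + apply is_derive_vec_scal; [apply is_derive_dot|]; eauto.
    + apply is_derive_vec_scal; [apply is_derive_Ropp, is_derive_dot|]; eauto.
    + apply is_derive_vec_scal; [apply is_derive_dot|]; eauto.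
    + apply is_derive_vec_scal; [|apply is_derive_vec_cross; eauto].
      unfold Rdiv. apply is_derive_Rmult.
      * apply is_derive_dot; [apply is_derive_vec_cross|]; eauto.
      * apply is_derive_Rinv; [|auto].
        apply is_derive_Rplus; [apply is_derive_Rconst | apply is_derive_dot; eauto].
  - unfold drot_regular, drot_singular, rot_formula.
    set (Yt := Y t) in *. set (Xt := X t) in *. set (Wt := W t) in *.
    clearbody Yt Xt Wt. revert Hc. destruct_vecs. unfold_vec. intros Hc.
    repeat (apply pair_equal_spec; split); field; exact Hc.
Qed.

Lemma rot_formula_rodrigues y x w :
  rot_formula y x w =
  vadd (vadd (vscal (dot y x) w) (cross (cross y x) w))
       (vscal (dot (cross y x) w / (1 + dot y x)) (cross y x)).
Proof. unfold rot_formula. vec_ext ltac:(unfold Rdiv; ring). Qed.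

Lemma dot_rodrigues_self c g k w :
  dot (vadd (vadd (vscal c w) (cross k w)) (vscal g k)) (vadd (vadd (vscal c w) (cross k w)) (vscal g k))
  = c^2 * dot w w + (dot k k * dot w w - (dot k w)^2) + g^2 * dot k k + 2 * c * g * dot k w.
Proof. vec_ring. Qed.

Section UnitSphere.
Variables x y : vec.
Hypothesis Hx : dot x x = 1.
Hypothesis Hy : dot y y = 1.

Lemma unit_dot_bounds : -1 <= dot y x <= 1.
Proof. pose proof (cauchy_schwarz_pow2 y x). rewrite Hx, Hy in H. nra. Qed.

Lemma unit_dot_cross_self : dot (cross y x) (cross y x) = (1 - dot y x) * (1 + dot y x).
Proof. rewrite lagrange_identity, Hx, Hy. ring. Qed.

Lemma unit_vnorm_add_mul_self : vnorm (vadd x y) * vnorm (vadd x y) = 2 * (1 + dot y x).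
Proof. rewrite vnorm_mul_self, dot_add_self, Hx, Hy, (dot_comm x y). ring. Qed.

Lemma unit_one_add_dot_neq0 : y <> vopp x -> 1 + dot y x <> 0.
Proof.
  intros Hn Hc. apply Hn.
  assert (H : dot (vadd y x) (vadd y x) = 0) by (rewrite dot_add_self, Hx, Hy; lra).
  now apply vadd_eq0, dot_self_eq0.
Qed.

Lemma unit_one_sub_dot_neq0 : y <> x -> 1 - dot y x <> 0.
Proof.
  intros Hn Hc. apply Hn.
  assert (H : dot (vsub y x) (vsub y x) = 0) by (rewrite dot_sub_self, Hx, Hy; lra).
  now apply vsub_eq0, dot_self_eq0.
Qed.

Lemma unit_one_add_dot_pos : y <> vopp x -> 0 < 1 + dot y x.
Proof. intros Hn. pose proof unit_dot_bounds. pose proof (unit_one_add_dot_neq0 Hn). lra. Qed.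

Lemma unit_vnorm_add_pos : 0 < 1 + dot y x -> 0 < vnorm (vadd x y).
Proof.
  intros Hc. pose proof unit_vnorm_add_mul_self. pose proof (vnorm_ge0 (vadd x y)).
  destruct (Req_dec (vnorm (vadd x y)) 0) as [E|]; [rewrite E in H; lra | lra].
Qed.

Lemma rot_formula_vnorm w : 1 + dot y x <> 0 -> vnorm (rot_formula y x w) = vnorm w.
Proof.
  intros Hc. unfold vnorm. f_equal.
  rewrite rot_formula_rodrigues, dot_rodrigues_self, unit_dot_cross_self.
  field. exact Hc.
Qed.

End UnitSphere.

Lemma rot_eq_formula x y w :
  dot x x = 1 -> dot y y = 1 -> y <> vopp x -> rot y x w = rot_formula y x w.
Proof.
  intros Hx Hy Hn. unfold rot.
  destruct (excluded_middle_informative (y = x)) as [->|Hne].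
  { unfold rot_formula. rewrite Hx. vec_ext ltac:(field). }
  destruct (excluded_middle_informative (y = vopp x)) as [|_]; [contradiction|].
  pose proof (unit_one_add_dot_neq0 x y Hx Hy Hn) as Hp.
  pose proof (unit_one_sub_dot_neq0 x y Hx Hy Hne) as Hm.
  cbv zeta. unfold rot_formula.
  set (c := dot y x) in *. set (k := cross y x) in *.
  assert (Hk2 : vnorm k * vnorm k = (1 - c) * (1 + c))
    by (rewrite vnorm_mul_self; now apply unit_dot_cross_self).
  assert (Hk : vnorm k <> 0).
  { intros Z. rewrite Z in Hk2. assert ((1 - c) * (1 + c) <> 0) by (apply Rmult_integral_contrapositive; auto). lra. }
  replace (vscal ((1 - c) * dot (vscal (/ vnorm k) k) w) (vscal (/ vnorm k) k))
    with (vscal (dot k w / (1 + c)) k); [reflexivity|].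
  replace (vscal ((1 - c) * dot (vscal (/ vnorm k) k) w) (vscal (/ vnorm k) k))
    with (vscal ((1 - c) * (/ vnorm k * / vnorm k) * dot k w) k) by vec_ext ltac:(ring).
  replace (/ vnorm k * / vnorm k) with (/ ((1 - c) * (1 + c))) by (rewrite <- Hk2; field; auto).
  f_equal. field. auto.
Qed.

Lemma vnorm_tangent_part_le a b : dot a a = 1 -> dot b b = 1 ->
  vnorm (vsub (vscal 1 b) (vscal (dot a b) a)) <= vnorm (vsub b a).
Proof.
  intros Ha Hb. apply vnorm_le; [apply vnorm_ge0|]. rewrite vnorm_pow2.
  replace (dot (vsub (vscal 1 b) (vscal (dot a b) a)) (vsub (vscal 1 b) (vscal (dot a b) a)))
    with (dot b b - 2 * dot a b * dot a b + dot a b ^ 2 * dot a a) by vec_ring.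
  rewrite dot_sub_self, Ha, Hb, (dot_comm b a). pose proof (pow2_ge_0 (1 - dot a b)). nra.
Qed.

Lemma rot_formula_dot_base x y w : dot x x = 1 -> dot x (rot_formula y x w) = dot y w.
Proof.
  intros Hx. unfold rot_formula. rewrite !dot_add_r, !dot_scal_r, Hx.
  replace (dot x (cross y x)) with 0 by vec_ring. rewrite (dot_comm x y). ring.
Qed.

Lemma rot_formula_add y x a b :
  rot_formula y x (vadd a b) = vadd (rot_formula y x a) (rot_formula y x b).
Proof. unfold rot_formula. vec_ext ltac:(unfold Rdiv; ring). Qed.

Lemma rot_formula_scal y x r a : rot_formula y x (vscal r a) = vscal r (rot_formula y x a).
Proof. unfold rot_formula. vec_ext ltac:(unfold Rdiv; ring). Qed.

Lemma rot_formula_base x y : dot y y = 1 -> rot_formula y x y = x.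
Proof.
  intros Hy. unfold rot_formula. rewrite Hy, (dot_comm x y).
  replace (dot (cross y x) y) with 0 by vec_ring. vec_ext ltac:(unfold Rdiv; ring).
Qed.

Lemma vnorm_scal_le r a A B : Rabs r <= A -> vnorm a <= B -> vnorm (vscal r a) <= A * B.
Proof.
  intros. rewrite vnorm_scal. pose proof (Rabs_pos r); pose proof (vnorm_ge0 a).
  apply Rmult_le_compat; lra.
Qed.

Lemma vnorm_scal_div a d k : 0 < d -> vnorm (vscal (a / d) k) = Rabs a * vnorm k / d.
Proof.
  intros Hd. rewrite vnorm_scal, Rabs_div, (Rabs_right d) by lra. field. lra.
Qed.

Lemma dot_tangent_sum x y x' y' :
  dot y y' = 0 -> dot x x' = 0 ->
  dot y' x + dot y x' = dot y' (vadd x y) + dot (vadd x y) x'.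
Proof.
  intros Hy Hx.
  replace (dot y' x + dot y x') with (dot y' (vadd x y) + dot (vadd x y) x' - dot y y' - dot x x')
    by vec_ring.
  lra.
Qed.

Section DrotBounds.
Variables x y w x' y' : vec.
Variable V : R.
Hypothesis Hx : dot x x = 1.
Hypothesis Hy : dot y y = 1.
Hypothesis Hw : vnorm w <= V.
Hypothesis Hx' : vnorm x' <= V.
Hypothesis Hy' : vnorm y' <= V.

Let nx : vnorm x = 1 := vnorm_unit x Hx.
Let ny : vnorm y = 1 := vnorm_unit y Hy.

Lemma drot_regular_bound : vnorm (drot_regular y x w y' x') <= 6 * V^2.
Proof.
  assert (Hcd : Rabs (dot y' x + dot y x') <= 2 * V).
  { eapply Rle_trans; [apply Rabs_triang|].
    pose proof (Rabs_dot_le y' x V 1 Hy' (Req_le _ _ nx)).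
    pose proof (Rabs_dot_le y x' 1 V (Req_le _ _ ny) Hx'). lra. }
  unfold drot_regular.
  replace (6 * V^2) with ((2 * V * V + V * V * 1) + ((1 * V * V + V * V * 1) + 1 * V * V)) by ring.
  repeat apply vnorm_add_le; apply vnorm_scal_le; rewrite ?Rabs_Ropp, ?nx, ?ny;
    auto using Rle_refl, Rabs_dot_le, Req_le.
Qed.

Let s := vnorm (vadd x y).

Lemma vnorm_cross_le_vnorm_add : vnorm (cross y x) <= s.
Proof.
  pose proof (unit_dot_bounds x y Hx Hy).
  apply vnorm_le; [apply vnorm_ge0|].
  rewrite unit_dot_cross_self by auto.
  replace (s ^ 2) with (s * s) by ring. unfold s. rewrite unit_vnorm_add_mul_self by auto.
  nra.
Qed.

Hypothesis Hyy' : dot y y' = 0.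
Hypothesis Hxx' : dot x x' = 0.

Lemma Rabs_dot_tangent_sum_le : Rabs (dot y' x + dot y x') <= 2 * V * s.
Proof.
  rewrite dot_tangent_sum by auto.
  eapply Rle_trans; [apply Rabs_triang|].
  pose proof (Rabs_dot_le y' (vadd x y) V s Hy' (Rle_refl _)).
  pose proof (Rabs_dot_le (vadd x y) x' s V (Rle_refl _) Hx'). lra.
Qed.

Lemma vnorm_dcross_le : vnorm (vadd (cross y' x) (cross y x')) <= 2 * V.
Proof.
  eapply Rle_trans; [apply vnorm_add|].
  pose proof (vnorm_cross y' x); pose proof (vnorm_cross y x').
  rewrite nx in *; rewrite ny in *. lra.
Qed.

Hypothesis Hc : 0 < 1 + dot y x.

Lemma drot_singular_bound : vnorm (drot_singular y x w y' x') <= 16 * V^2 / s.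
Proof.
  set (u := 1 + dot y x) in *.
  assert (Hs2 : s * s = 2 * u) by (apply unit_vnorm_add_mul_self; auto).
  assert (Hs : 0 < s) by (apply unit_vnorm_add_pos; auto).
  assert (HV : 0 <= V) by (pose proof (vnorm_ge0 w); lra).
  set (kn := vnorm (cross y x)).
  assert (Hkn : kn <= s) by apply vnorm_cross_le_vnorm_add.
  assert (Hkn0 : 0 <= kn) by apply vnorm_ge0.
  assert (Hp : Rabs (dot (cross y x) w) <= kn * V) by (apply Rabs_dot_le; [apply Rle_refl | auto]).
  pose proof Rabs_dot_tangent_sum_le as Hcd.
  pose proof vnorm_dcross_le as Hkd.
  pose proof (Rabs_dot_le _ _ _ _ Hkd Hw) as Hkdw.
  pose proof (Rabs_pos (dot (cross y x) w)); pose proof (Rabs_pos (dot y' x + dot y x')).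
  pose proof (Rabs_pos (dot (vadd (cross y' x) (cross y x')) w)).
  assert (Hu : u = s * s / 2) by lra.
  unfold drot_singular. fold u.
  (* each term carries a factor 1/u = 2/s^2, compensated by |y × x| <= s and |<y',x> + <y,x'>| <= 2 V s *)
  replace (16 * V^2 / s) with (4 * V^2 / s + (8 * V^2 / s + 4 * V^2 / s)) by (field; lra).
  repeat apply vnorm_add_le; rewrite vnorm_scal_div by (apply pow_lt || idtac; lra);
    (apply Rle_div_l; [try apply pow_lt; lra|]); fold kn.
  - replace (4 * V^2 / s * u) with ((2 * V * V) * s) by (rewrite Hu; field; lra).
    apply Rmult_le_compat; auto.
  - replace (8 * V^2 / s * u^2) with ((s * V) * (2 * V * s) * s) by (rewrite Hu; field; lra).
    rewrite Rabs_Ropp, Rabs_mult.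
    repeat apply Rmult_le_compat; auto using Rmult_le_pos, Rabs_pos.
    eapply Rle_trans; [exact Hp|]. apply Rmult_le_compat_r; lra.
  - replace (4 * V^2 / s * u) with ((s * V) * (2 * V)) by (rewrite Hu; field; lra).
    apply Rmult_le_compat; auto using vnorm_ge0, Rabs_pos.
    eapply Rle_trans; [exact Hp|]. apply Rmult_le_compat_r; lra.
Qed.

End DrotBounds.

(** * The particle system *)

Lemma rot_dot_base x1 x2 w : x1 <> vopp x2 ->
  exists m, (m = 1 \/ m = dot x2 x2) /\ dot x2 (rot x1 x2 w) = dot x1 w * m.
Proof.
  intros H. unfold rot.
  destruct (excluded_middle_informative (x1 = x2)) as [->|E].
  { exists 1. split; auto. ring. }
  destruct (excluded_middle_informative (x1 = vopp x2)); [contradiction|].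
  exists (dot x2 x2). split; auto. cbv zeta.
  set (u := vscal (/ vnorm (cross x1 x2)) (cross x1 x2)).
  assert (dot x2 u = 0) by (unfold u; vec_ring).
  rewrite !dot_add_r, !dot_scal_r, H0, (dot_comm x2 x1). ring.
Qed.

Lemma dot_x_accel N sigma psi x v i s :
  dot (x i s) (x i s) <> 0 ->
  dot (x i s) (accel N sigma psi x v i s) =
  - dot (v i s) (v i s) +
  rsum (fun j => psiij psi x i j s / INR N
                 * (dot (x i s) (rot (x j s) (x i s) (v j s)) - dot (x i s) (v i s))) N.
Proof.
  intros Hb. unfold accel. rewrite !dot_add_r, dot_scal_r, !dot_vsum_r, !vnorm_pow2.
  replace (rsum (fun k => dot (x i s) (vscal (sigma / INR N)
             (vsub (vscal (dot (x i s) (x i s)) (x k s)) (vscal (dot (x i s) (x k s)) (x i s))))) N)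
    with 0.
  2:{ rewrite <- (Rmult_0_r (INR N)), <- rsum_const. apply rsum_ext. intros.
      rewrite dot_scal_r, dot_sub_r, !dot_scal_r. ring. }
  replace (rsum (fun j => dot (x i s) (vscal (psiij psi x i j s / INR N)
             (vsub (rot (x j s) (x i s) (v j s)) (v i s)))) N)
    with (rsum (fun j => psiij psi x i j s / INR N
             * (dot (x i s) (rot (x j s) (x i s) (v j s)) - dot (x i s) (v i s))) N).
  2:{ apply rsum_ext. intros. rewrite dot_scal_r, dot_sub_r. ring. }
  field. auto.
Qed.

Lemma dot_v_accel N sigma psi x v k s :
  dot (x k s) (x k s) = 1 -> dot (x k s) (v k s) = 0 ->
  dot (v k s) (accel N sigma psi x v k s) =
  rsum (fun j => psiij psi x k j s / INR N
                 * (dot (v k s) (rot (x j s) (x k s) (v j s)) - dot (v k s) (v k s))) N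
  + sigma / INR N * rsum (fun l => dot (v k s) (x l s)) N.
Proof.
  intros Hk1 Hk2. unfold accel.
  rewrite !dot_add_r, dot_scal_r, !dot_vsum_r, (dot_comm (v k s) (x k s)), Hk2, (vnorm_pow2 (x k s)), Hk1.
  rewrite <- rsum_scal.
  replace (rsum (fun j => dot (v k s) (vscal (sigma / INR N)
             (vsub (vscal 1 (x j s)) (vscal (dot (x k s) (x j s)) (x k s))))) N)
    with (rsum (fun l => sigma / INR N * dot (v k s) (x l s)) N).
  2:{ apply rsum_ext. intros l Hl. rewrite dot_scal_r, dot_sub_r, !dot_scal_r.
      rewrite (dot_comm (v k s) (x k s)), Hk2. ring. }
  replace (rsum (fun j => dot (v k s) (vscal (psiij psi x k j s / INR N)
             (vsub (rot (x j s) (x k s) (v j s)) (v k s)))) N)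
    with (rsum (fun j => psiij psi x k j s / INR N
             * (dot (v k s) (rot (x j s) (x k s) (v j s)) - dot (v k s) (v k s))) N).
  2:{ apply rsum_ext. intros j Hj. rewrite dot_scal_r, dot_sub_r. ring. }
  ring.
Qed.

Section Dynamics.
Variables (N : nat) (sigma : R) (psi : R -> R) (x v : nat -> R -> vec).
Hypothesis HN : (1 <= N)%nat.
Hypothesis Hsol : is_solution N sigma psi x v.
Hypothesis Hinit : forall i, (i < N)%nat -> vnorm (x i 0) = 1 /\ dot (v i 0) (x i 0) = 0.
Hypothesis Hopp : forall i j t, (i < N)%nat -> (j < N)%nat -> 0 <= t -> x i t <> vopp (x j t).
Hypothesis Hsym : forall i j t, (i < N)%nat -> (j < N)%nat -> 0 <= t ->
  psiij psi x i j t = psiij psi x j i t.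
Hypothesis Hpsi_nonneg : forall s, in02 s -> 0 <= psi s.
Hypothesis Hpsi_decr : forall a b, in02 a -> in02 b -> a <= b -> psi b <= psi a.

Lemma INR_N_pos : 0 < INR N.
Proof. apply lt_0_INR. lia. Qed.

Lemma is_derive_vec_x i s : (i < N)%nat -> 0 < s -> is_derive_vec (x i) s (v i s).
Proof. intros. apply is_derive_vec_of, (Hsol i H); auto. Qed.

Lemma is_derive_vec_v i s :
  (i < N)%nat -> 0 < s -> is_derive_vec (v i) s (accel N sigma psi x v i s).
Proof. intros. apply is_derive_vec_of, (Hsol i H); auto. Qed.

Lemma x_right_cont i T : (i < N)%nat -> 0 <= T -> filterlim (x i) (at_right T) (locally (x i T)).
Proof.
  intros Hi HT. destruct (Req_dec T 0) as [->|HT0]; [apply (Hsol i Hi)|].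
  eapply filterlim_filter_le_1; [apply filter_le_within|].
  apply (@ex_derive_continuous R_AbsRing _ (x i) T). exists (v i T). apply (Hsol i Hi). lra.
Qed.

Lemma v_right_cont i T : (i < N)%nat -> 0 <= T -> filterlim (v i) (at_right T) (locally (v i T)).
Proof.
  intros Hi HT. destruct (Req_dec T 0) as [->|HT0]; [apply (Hsol i Hi)|].
  eapply filterlim_filter_le_1; [apply filter_le_within|].
  apply (@ex_derive_continuous R_AbsRing _ (v i) T).
  exists (accel N sigma psi x v i T). apply (Hsol i Hi). lra.
Qed.

Definition radial i s := dot (x i s) (v i s).
Definition sqnorm i s := dot (x i s) (x i s).

(** Vanishes exactly when every [(x_i, v_i)] lies on the tangent bundle of the sphere. *)
Definition defect s := rsum (fun i => radial i s * radial i s + (sqnorm i s - 1) * (sqnorm i s - 1)) N.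

Definition defect_rate s :=
  rsum (fun i => 2 * radial i s * (dot (v i s) (v i s) + dot (x i s) (accel N sigma psi x v i s))
                 + 2 * (sqnorm i s - 1) * (2 * radial i s)) N.

Lemma defect_derive s : 0 < s -> is_derive defect s (defect_rate s).
Proof.
  intros Hs. apply is_derive_rsum. intros i Hi.
  assert (Ha : is_derive (radial i) s (dot (v i s) (v i s) + dot (x i s) (accel N sigma psi x v i s)))
    by (apply is_derive_dot; [apply is_derive_vec_x | apply is_derive_vec_v]; auto).
  assert (Hb : is_derive (sqnorm i) s (2 * radial i s)).
  { eapply is_derive_value; [apply is_derive_dot; apply is_derive_vec_x; auto|].
    unfold radial. rewrite (dot_comm (v i s)). ring. }
  eapply is_derive_value.
  - apply is_derive_Rplus; apply is_derive_Rmult; try exact Ha;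
      apply is_derive_Rminus; try exact Hb; apply is_derive_Rconst.
  - cbv beta; ring.
Qed.

Lemma defect_ge_term s i :
  (i < N)%nat -> radial i s * radial i s + (sqnorm i s - 1) * (sqnorm i s - 1) <= defect s.
Proof.
  intros Hi.
  apply (rsum_ge_term (fun i => radial i s * radial i s + (sqnorm i s - 1) * (sqnorm i s - 1))); auto.
  intros k _. pose proof (Rle_0_sqr (radial k s)); pose proof (Rle_0_sqr (sqnorm k s - 1)).
  unfold Rsqr in *. lra.
Qed.

Lemma defect_ge0 s : 0 <= defect s.
Proof.
  apply rsum_nonneg. intros k _.
  pose proof (Rle_0_sqr (radial k s)); pose proof (Rle_0_sqr (sqnorm k s - 1)).
  unfold Rsqr in *. lra.
Qed.

Lemma defect_eq0 s : defect s = 0 -> forall i, (i < N)%nat -> radial i s = 0 /\ sqnorm i s = 1.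
Proof.
  intros H i Hi. pose proof (defect_ge_term s i Hi) as Hle. rewrite H in Hle.
  pose proof (Rle_0_sqr (radial i s)); pose proof (Rle_0_sqr (sqnorm i s - 1)). unfold Rsqr in *.
  assert (Ha : radial i s * radial i s = 0) by lra.
  assert (Hb : (sqnorm i s - 1) * (sqnorm i s - 1) = 0) by lra.
  apply Rmult_integral in Ha, Hb. split; [tauto | lra].
Qed.

Lemma defect_right_cont T : 0 <= T -> filterlim defect (at_right T) (locally (defect T)).
Proof.
  intros HT. unfold defect, radial, sqnorm.
  apply (filterlim_rsum (fun k s => dot (x k s) (v k s) * dot (x k s) (v k s)
    + (dot (x k s) (x k s) - 1) * (dot (x k s) (x k s) - 1))).
  intros k Hk.
  pose proof (x_right_cont k T Hk HT). pose proof (v_right_cont k T Hk HT).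
  apply filterlim_Rplus; apply filterlim_Rmult;
    try apply filterlim_Rminus; try apply filterlim_dot; auto; apply filterlim_const.
Qed.

Lemma radial_mul_le s i j m :
  (i < N)%nat -> (j < N)%nat -> Rabs m <= 2 -> radial i s * radial j s * m <= 2 * defect s.
Proof.
  intros Hi Hj Hm.
  pose proof (defect_ge_term s i Hi); pose proof (defect_ge_term s j Hj).
  pose proof (Rle_0_sqr (sqnorm i s - 1)); pose proof (Rle_0_sqr (sqnorm j s - 1)).
  pose proof (Rle_0_sqr (radial i s)); pose proof (Rle_0_sqr (radial j s)). unfold Rsqr in *.
  assert (Hij : Rabs (radial i s * radial j s) <= defect s).
  { apply Rsqr_incr_0_var; [|pose proof (defect_ge0 s); lra].
    rewrite <- Rsqr_abs. unfold Rsqr.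
    replace (radial i s * radial j s * (radial i s * radial j s))
      with ((radial i s * radial i s) * (radial j s * radial j s)) by ring.
    apply Rmult_le_compat; lra. }
  pose proof (Rle_abs (radial i s * radial j s * m)) as Ha. rewrite Rabs_mult in Ha.
  pose proof (Rabs_pos m); pose proof (Rabs_pos (radial i s * radial j s)).
  assert (Rabs (radial i s * radial j s) * Rabs m <= defect s * 2) by (apply Rmult_le_compat; lra).
  lra.
Qed.

Lemma radial_align_le s i j :
  (i < N)%nat -> (j < N)%nat -> 0 <= s -> sqnorm i s < 3/2 ->
  2 * radial i s * (dot (x i s) (rot (x j s) (x i s) (v j s)) - radial i s) <= 4 * defect s.
Proof.
  intros Hi Hj Hs Hb.
  destruct (rot_dot_base (x j s) (x i s) (v j s)) as [m [Hm ->]]; [apply Hopp; auto|].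
  fold (radial j s).
  assert (Hm2 : Rabs m <= 2).
  { destruct Hm as [->| ->]; [rewrite Rabs_R1; lra|].
    pose proof (dot_self_ge0 (x i s)). unfold sqnorm in Hb. rewrite Rabs_right; lra. }
  pose proof (radial_mul_le s i j m Hi Hj Hm2). pose proof (Rle_0_sqr (radial i s)).
  unfold Rsqr in *. lra.
Qed.

Lemma defect_rate_term_le s P i :
  0 < s -> 0 <= P -> (i < N)%nat -> 1/2 < sqnorm i s < 3/2 ->
  (forall j, (j < N)%nat -> 0 <= psiij psi x i j s <= P) ->
  2 * radial i s * (dot (v i s) (v i s) + dot (x i s) (accel N sigma psi x v i s))
  + 2 * (sqnorm i s - 1) * (2 * radial i s) <= 4 * P * defect s + 2 * defect s.
Proof.
  intros Hs HP Hi Hb Hpsi.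
  pose proof INR_N_pos. pose proof (defect_ge0 s).
  assert (Hbi : sqnorm i s <> 0) by lra.
  unfold sqnorm in Hbi. rewrite dot_x_accel by auto.
  assert (Hcross : 2 * (sqnorm i s - 1) * (2 * radial i s) <= 2 * defect s).
  { pose proof (defect_ge_term s i Hi). pose proof (Rle_0_sqr (radial i s - (sqnorm i s - 1))).
    unfold Rsqr in *. lra. }
  enough (rsum (fun j => psiij psi x i j s / INR N
             * (2 * radial i s * (dot (x i s) (rot (x j s) (x i s) (v j s)) - radial i s))) N
          <= 4 * P * defect s).
  { replace (2 * radial i s * (_ + _)) with
      (rsum (fun j => psiij psi x i j s / INR N
             * (2 * radial i s * (dot (x i s) (rot (x j s) (x i s) (v j s)) - radial i s))) N).
    - lra.
    - transitivity (2 * radial i s * rsum (fun j => psiij psi x i j s / INR N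
        * (dot (x i s) (rot (x j s) (x i s) (v j s)) - dot (x i s) (v i s))) N).
      + rewrite <- rsum_scal. apply rsum_ext. intros. unfold radial. ring.
      + unfold radial. ring. }
  replace (4 * P * defect s) with (rsum (fun _ => P / INR N * (4 * defect s)) N)
    by (rewrite rsum_const; field; lra).
  apply rsum_le. intros j Hj. specialize (Hpsi j Hj).
  apply mul_le_of_bounds; [split | apply radial_align_le | ]; auto; try lra.
  - apply Rdiv_le_0_compat; lra.
  - apply Rmult_le_compat_r; [left; apply Rinv_0_lt_compat|]; lra.
Qed.

Lemma defect_rate_le s P :
  0 < s -> 0 <= P ->
  (forall i, (i < N)%nat -> 1/2 < sqnorm i s < 3/2) ->
  (forall i j, (i < N)%nat -> (j < N)%nat -> 0 <= psiij psi x i j s <= P) ->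
  defect_rate s <= INR N * (4 * P + 2) * defect s.
Proof.
  intros Hs HP Hb Hpsi.
  replace (INR N * (4 * P + 2) * defect s) with (rsum (fun _ => 4 * P * defect s + 2 * defect s) N)
    by (rewrite rsum_const; ring).
  apply rsum_le. intros i Hi. apply defect_rate_term_le; auto.
Qed.

Lemma defect_at0 : defect 0 = 0.
Proof.
  unfold defect. transitivity (rsum (fun _ => 0) N); [|rewrite rsum_const; ring].
  apply rsum_ext. intros i Hi.
  destruct (Hinit i Hi) as [H1 H2]. unfold radial, sqnorm. cbv beta.
  rewrite (dot_comm (x i 0) (v i 0)), H2, <- vnorm_pow2, H1. ring.
Qed.

Lemma near_sphere_eventually T : 0 <= T -> defect T = 0 ->
  at_right T (fun s => (forall i, (i < N)%nat -> 1/2 < sqnorm i s < 3/2) /\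
    forall i, (i < N)%nat -> forall j, (j < N)%nat ->
      dot (vsub (x i s) (x j s)) (vsub (x i s) (x j s)) < 4).
Proof.
  intros HT QT. apply filter_and; apply filter_forall_lt; intros i Hi.
  - destruct (defect_eq0 T QT i Hi) as [_ Hbi].
    assert (L : filterlim (sqnorm i) (at_right T) (locally (sqnorm i T)))
      by (apply filterlim_dot; apply x_right_cont; auto).
    apply filter_and; [apply (filterlim_gt_eventually (sqnorm i) (sqnorm i T))
                      |apply (filterlim_lt_eventually (sqnorm i) (sqnorm i T))]; auto; lra.
  - apply filter_forall_lt. intros j Hj.
    destruct (defect_eq0 T QT i Hi) as [_ Hbi]. destruct (defect_eq0 T QT j Hj) as [_ Hbj].
    unfold sqnorm in Hbi, Hbj.
    (* by continuity, since |x_i - x_j|^2 = 2 - 2 <x_i,x_j> < 4 when x_i <> -x_j *)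
    apply (filterlim_lt_eventually _ (dot (x i T) (x i T) - 2 * dot (x i T) (x j T) + dot (x j T) (x j T))).
    + apply (filterlim_ext (fun s => dot (x i s) (x i s) - 2 * dot (x i s) (x j s) + dot (x j s) (x j s))).
      { intros s. symmetry. apply dot_sub_self. }
      apply filterlim_Rplus; [apply filterlim_Rminus|]; [| apply filterlim_Rmult; [apply filterlim_const|] |];
        apply filterlim_dot; apply x_right_cont; auto.
    + pose proof (unit_one_add_dot_neq0 (x j T) (x i T) Hbj Hbi (Hopp i j T Hi Hj HT)).
      pose proof (unit_dot_bounds (x j T) (x i T) Hbj Hbi). lra.
Qed.

Lemma psiij_le_psi0 i j s :
  (i < N)%nat -> (j < N)%nat -> dot (vsub (x i s) (x j s)) (vsub (x i s) (x j s)) < 4 ->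
  0 <= psiij psi x i j s <= psi 0.
Proof.
  intros Hi Hj Hd. unfold psiij.
  assert (Hin : in02 (vnorm (vsub (x i s) (x j s))))
    by (split; [apply vnorm_ge0 | apply vnorm_le; lra]).
  split; [apply Hpsi_nonneg; auto | apply Hpsi_decr; auto; [unfold in02; lra | apply Hin]].
Qed.

Lemma defect_vanishes_right T : 0 <= T -> defect T = 0 ->
  exists d, 0 < d /\ forall s, T < s < T + d -> defect s = 0.
Proof.
  intros HT QT.
  destruct (at_right_interval _ _ (near_sphere_eventually T HT QT)) as [d [Hd Hev]].
  exists d. split; auto.
  assert (HP : 0 <= psi 0) by (apply Hpsi_nonneg; unfold in02; lra).
  apply (gronwall_zero defect (INR N * (4 * psi 0 + 2))); auto using defect_right_cont.
  intros s Hs. destruct (Hev s Hs) as [Hb Hdist].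
  split; [apply defect_ge0|].
  exists (defect_rate s). split; [apply defect_derive; lra|].
  apply defect_rate_le; auto; [lra|].
  intros i j Hi Hj. apply psiij_le_psi0; auto.
Qed.

Lemma defect_vanishes s : 0 <= s -> defect s = 0.
Proof.
  apply vanishing_by_continuation; [apply defect_at0 | | apply defect_vanishes_right].
  intros T HT. eapply is_derive_continuous, defect_derive, HT.
Qed.

Lemma on_sphere i s : (i < N)%nat -> 0 <= s -> dot (x i s) (x i s) = 1 /\ dot (x i s) (v i s) = 0.
Proof. intros Hi Hs. destruct (defect_eq0 s (defect_vanishes s Hs) i Hi). split; auto. Qed.

Lemma psiij_nonneg k l s : (k < N)%nat -> (l < N)%nat -> 0 <= s -> 0 <= psiij psi x k l s.
Proof.
  intros Hk Hl Hs. apply Hpsi_nonneg.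
  destruct (on_sphere k s Hk Hs) as [Hk1 _]. destruct (on_sphere l s Hl Hs) as [Hl1 _].
  split; [apply vnorm_ge0 | apply vnorm_le; [lra|]].
  rewrite dot_sub_self. pose proof (unit_dot_bounds (x k s) (x l s) Hk1 Hl1).
  rewrite (dot_comm (x k s) (x l s)). lra.
Qed.

Lemma vnorm_rot j k s w : (j < N)%nat -> (k < N)%nat -> 0 <= s ->
  vnorm (rot (x j s) (x k s) w) = vnorm w.
Proof.
  intros Hj Hk Hs.
  destruct (on_sphere k s Hk Hs) as [Hk1 _]. destruct (on_sphere j s Hj Hs) as [Hj1 _].
  assert (Hn : x j s <> vopp (x k s)) by auto.
  rewrite rot_eq_formula by auto. apply rot_formula_vnorm; auto.
  now apply unit_one_add_dot_neq0.
Qed.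

Definition kinetic s := rsum (fun k => dot (v k s) (v k s)) N.
Definition potential s :=
  rsum (fun k => rsum (fun l => dot (vsub (x k s) (x l s)) (vsub (x k s) (x l s))) N) N.

Lemma energy_split s :
  energy N sigma x v s = / INR N * kinetic s + sigma / (2 * (INR N)^2) * potential s.
Proof.
  unfold energy, kinetic, potential. f_equal; f_equal.
  - apply rsum_ext. intros. apply vnorm_pow2.
  - apply rsum_ext. intros. apply rsum_ext. intros. apply vnorm_pow2.
Qed.

Definition align_power s :=
  rsum (fun k => rsum (fun j => psiij psi x k j s / INR N
    * (dot (v k s) (rot (x j s) (x k s) (v j s)) - dot (v k s) (v k s))) N) N.
Definition cross_moment s := rsum (fun k => rsum (fun l => dot (v k s) (x l s)) N) N.

Lemma kinetic_derive s : 0 < s ->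
  is_derive kinetic s (2 * align_power s + 2 * (sigma / INR N) * cross_moment s).
Proof.
  intros Hs.
  eapply is_derive_value.
  { apply (is_derive_rsum (fun k s => dot (v k s) (v k s))). intros k Hk.
    apply is_derive_dot; apply is_derive_vec_v; auto. }
  unfold align_power, cross_moment. rewrite <- !rsum_scal, <- rsum_plus.
  apply rsum_ext. intros k Hk.
  destruct (on_sphere k s Hk ltac:(lra)) as [Hk1 Hk2].
  rewrite (dot_comm (accel _ _ _ _ _ _ _)), dot_v_accel by auto. ring.
Qed.

Lemma potential_derive s : 0 < s -> is_derive potential s (-4 * cross_moment s).
Proof.
  intros Hs.
  eapply is_derive_value.
  { apply (is_derive_rsum (fun k s => rsum (fun l => dot (vsub (x k s) (x l s)) (vsub (x k s) (x l s))) N)).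
    intros k Hk. apply (is_derive_rsum (fun l s => dot (vsub (x k s) (x l s)) (vsub (x k s) (x l s)))).
    intros l Hl. apply is_derive_dot; apply is_derive_vec_sub; apply is_derive_vec_x; auto. }
  (* the radial parts vanish on the sphere, and the double sum is symmetric in (k, l) *)
  transitivity (rsum (fun k => -2 * rsum (fun l => dot (v k s) (x l s)) N
                               + -2 * rsum (fun l => dot (v l s) (x k s)) N) N).
  - apply rsum_ext. intros k Hk. rewrite <- !rsum_scal, <- rsum_plus. apply rsum_ext. intros l Hl.
    destruct (on_sphere k s Hk ltac:(lra)) as [_ Hk2]. destruct (on_sphere l s Hl ltac:(lra)) as [_ Hl2].
    replace (dot _ (vsub (x k s) (x l s)) + dot (vsub (x k s) (x l s)) _)
      with (2 * (dot (x k s) (v k s) - dot (v l s) (x k s) - dot (v k s) (x l s) + dot (x l s) (v l s)))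
      by vec_ring.
    rewrite Hk2, Hl2. ring.
  - rewrite rsum_plus, !rsum_scal. unfold cross_moment.
    rewrite (rsum_swap (fun k l => dot (v l s) (x k s))). ring.
Qed.

Lemma align_power_nonpos s : 0 <= s -> align_power s <= 0.
Proof.
  intros Hs. pose proof INR_N_pos.
  (* <v_k, R v_j> <= (|v_j|^2 + |v_k|^2)/2 since R is an isometry; then symmetrize with psi_kj = psi_jk *)
  transitivity (rsum (fun k => rsum (fun j => psiij psi x k j s / INR N
                  * ((dot (v j s) (v j s) - dot (v k s) (v k s)) / 2)) N) N).
  - apply rsum_le. intros k Hk. apply rsum_le. intros j Hj.
    apply Rmult_le_compat_l; [apply Rdiv_le_0_compat; auto; apply psiij_nonneg; auto|].
    pose proof (dot_self_ge0 (vsub (v k s) (rot (x j s) (x k s) (v j s)))) as Hsq.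
    rewrite dot_sub_self, <- (vnorm_pow2 (rot _ _ _)), vnorm_rot, vnorm_pow2 in Hsq by auto.
    lra.
  - right.
    transitivity (rsum (fun k => rsum (fun j => psiij psi x k j s / INR N / 2 * dot (v j s) (v j s)) N) N
                - rsum (fun k => rsum (fun j => psiij psi x k j s / INR N / 2 * dot (v k s) (v k s)) N) N).
    + rewrite <- rsum_minus. apply rsum_ext. intros k Hk.
      rewrite <- rsum_minus. apply rsum_ext. intros j Hj. field. lra.
    + rewrite (rsum_swap (fun k j => psiij psi x k j s / INR N / 2 * dot (v j s) (v j s))).
      rewrite (rsum_ext (fun l => rsum (fun k => psiij psi x k l s / INR N / 2 * dot (v l s) (v l s)) N)
                 (fun k => rsum (fun j => psiij psi x k j s / INR N / 2 * dot (v k s) (v k s)) N)).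
      * ring.
      * intros k Hk. apply rsum_ext. intros j Hj. rewrite Hsym; auto.
Qed.

Lemma energy_derive_nonpos s : 0 < s ->
  exists d, is_derive (energy N sigma x v) s d /\ d <= 0.
Proof.
  intros Hs. pose proof INR_N_pos.
  exists (2 / INR N * align_power s). split.
  - apply (is_derive_ext (fun s => / INR N * kinetic s + sigma / (2 * (INR N)^2) * potential s)).
    { intros. symmetry. apply energy_split. }
    eapply is_derive_value.
    + apply is_derive_Rplus; apply is_derive_Rmult;
        [apply is_derive_Rconst | apply kinetic_derive; auto
        |apply is_derive_Rconst | apply potential_derive; auto].
    + cbv beta. field. lra.
  - rewrite <- (Rmult_0_r (2 / INR N)). apply Rmult_le_compat_l.
    + apply Rdiv_le_0_compat; lra.
    + apply align_power_nonpos. lra.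
Qed.
Lemma energy_right_cont : filterlim (energy N sigma x v) (at_right 0) (locally (energy N sigma x v 0)).
Proof.
  apply (filterlim_ext (fun s => / INR N * kinetic s + sigma / (2 * (INR N)^2) * potential s)).
  { intros. symmetry. apply energy_split. }
  rewrite energy_split. unfold kinetic, potential.
  apply filterlim_Rplus; apply filterlim_Rmult; try apply filterlim_const.
  - apply (filterlim_rsum (fun k s => dot (v k s) (v k s))). intros k Hk.
    apply filterlim_dot; apply v_right_cont; auto; lra.
  - apply (filterlim_rsum (fun k s => rsum (fun l => dot (vsub (x k s) (x l s)) (vsub (x k s) (x l s))) N)).
    intros k Hk. apply (filterlim_rsum (fun l s => dot (vsub (x k s) (x l s)) (vsub (x k s) (x l s)))).
    intros l Hl.
    apply (filterlim_ext (fun s => dot (x k s) (x k s) - 2 * dot (x k s) (x l s) + dot (x l s) (x l s))).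
    { intros. symmetry. apply dot_sub_self. }
    rewrite dot_sub_self.
    apply filterlim_Rplus; [apply filterlim_Rminus|]; [| apply filterlim_Rmult; [apply filterlim_const|] |];
      apply filterlim_dot; apply x_right_cont; auto; lra.
Qed.

Lemma energy_le_initial s : 0 < s -> energy N sigma x v s <= energy N sigma x v 0.
Proof.
  intros Hs. apply (le_of_derive_nonpos _ 0 (s + 1)); [| apply energy_right_cont | lra].
  intros u Hu. apply energy_derive_nonpos. lra.
Qed.

Hypothesis Hsigma : 0 <= sigma.

Definition NE0 := INR N * energy N sigma x v 0.

Lemma kinetic_potential_le s : 0 < s -> kinetic s <= NE0 /\ sigma * potential s <= 2 * INR N * NE0.
Proof.
  intros Hs. pose proof INR_N_pos.
  pose proof (energy_le_initial s Hs) as He. unfold NE0. rewrite energy_split in He.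
  assert (Hk : 0 <= kinetic s) by (apply rsum_nonneg; intros; apply dot_self_ge0).
  assert (Hp : 0 <= potential s)
    by (apply rsum_nonneg; intros; apply rsum_nonneg; intros; apply dot_self_ge0).
  assert (Hk' : 0 <= / INR N * kinetic s) by (apply Rmult_le_pos; [left; apply Rinv_0_lt_compat|]; lra).
  assert (Hp' : 0 <= sigma / (2 * INR N ^ 2) * potential s)
    by (apply Rmult_le_pos; [apply Rdiv_le_0_compat; [|apply Rmult_lt_0_compat; [|apply pow_lt]]|]; lra).
  split.
  - replace (kinetic s) with (INR N * (/ INR N * kinetic s)) by (field; lra).
    apply Rmult_le_compat_l; lra.
  - replace (sigma * potential s) with (2 * INR N * (INR N * (sigma / (2 * INR N ^ 2) * potential s)))
      by (field; lra).
    apply Rmult_le_compat_l; [lra|]. apply Rmult_le_compat_l; lra.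
Qed.

Lemma dot_v_le_NE0 k t : (k < N)%nat -> 0 < t -> dot (v k t) (v k t) <= NE0.
Proof.
  intros Hk Ht. destruct (kinetic_potential_le t Ht) as [H _].
  eapply Rle_trans; [|exact H].
  apply (rsum_ge_term (fun k => dot (v k t) (v k t))); auto. intros; apply dot_self_ge0.
Qed.

Lemma NE0_nonneg : 0 <= NE0.
Proof.
  pose proof (dot_v_le_NE0 0 1 ltac:(lia) ltac:(lra)). pose proof (dot_self_ge0 (v 0%nat 1)). lra.
Qed.

Lemma vnorm_v_le k t : (k < N)%nat -> 0 < t -> vnorm (v k t) <= sqrt NE0.
Proof.
  intros. apply vnorm_le; [apply sqrt_pos|].
  rewrite pow2_sqrt by apply NE0_nonneg. now apply dot_v_le_NE0.
Qed.

Definition align_force k t :=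
  vsum (fun j => vscal (psiij psi x k j t / INR N) (vsub (rot (x j t) (x k t) (v j t)) (v k t))) N.
Definition sigma_force k t :=
  vsum (fun l => vscal (sigma / INR N)
    (vsub (vscal (vnorm (x k t) ^ 2) (x l t)) (vscal (dot (x k t) (x l t)) (x k t)))) N.

Lemma accel_split k t : accel N sigma psi x v k t =
  vadd (vscal (- vnorm (v k t) ^ 2 / vnorm (x k t) ^ 2) (x k t)) (vadd (align_force k t) (sigma_force k t)).
Proof. reflexivity. Qed.

Lemma psiij_le_maxpsi k l t : (k < N)%nat -> (l < N)%nat -> psiij psi x k l t <= maxpsi N psi x t.
Proof.
  intros Hk Hl. unfold maxpsi. eapply Rle_trans.
  - apply (rmaxn_ge (fun l0 => psiij psi x k l0 t) N l Hl).
  - apply (rmaxn_ge (fun l1 => rmaxn (fun k0 => psiij psi x l1 k0 t) N) N k Hk).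
Qed.

Lemma psi0_le_maxpsi t : psi 0 <= maxpsi N psi x t.
Proof.
  replace (psi 0) with (psiij psi x 0 0 t); [apply psiij_le_maxpsi; lia|].
  unfold psiij, vnorm. rewrite dot_sub_self. f_equal. rewrite <- sqrt_0. f_equal. ring.
Qed.

Lemma vnorm_align_force_le i t : (i < N)%nat -> 0 < t ->
  vnorm (align_force i t) <= 2 * maxpsi N psi x t * sqrt NE0.
Proof.
  intros Hi Ht. pose proof INR_N_pos.
  set (M := maxpsi N psi x t).
  unfold align_force. eapply Rle_trans; [apply vnorm_vsum|].
  replace (2 * M * sqrt NE0) with (rsum (fun _ => M / INR N * (2 * sqrt NE0)) N)
    by (rewrite rsum_const; field; lra).
  apply rsum_le. intros j Hj.
  pose proof (psiij_nonneg i j t Hi Hj ltac:(lra)).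
  apply vnorm_scal_le.
  - rewrite Rabs_right by (apply Rle_ge, Rdiv_le_0_compat; lra).
    apply Rmult_le_compat_r; [left; apply Rinv_0_lt_compat; lra | apply psiij_le_maxpsi; auto].
  - eapply Rle_trans; [apply vnorm_sub|].
    rewrite vnorm_rot by (auto; lra).
    pose proof (vnorm_v_le j t Hj Ht). pose proof (vnorm_v_le i t Hi Ht). lra.
Qed.

Lemma vnorm_sigma_force_le_dist i t : (i < N)%nat -> 0 < t ->
  vnorm (sigma_force i t) <= sigma / INR N * rsum (fun k => vnorm (vsub (x k t) (x i t))) N.
Proof.
  intros Hi Ht. pose proof INR_N_pos.
  destruct (on_sphere i t Hi ltac:(lra)) as [Hi1 _].
  unfold sigma_force. eapply Rle_trans; [apply vnorm_vsum|].
  rewrite <- rsum_scal. apply rsum_le. intros k Hk.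
  rewrite vnorm_scal, Rabs_right by (apply Rle_ge, Rdiv_le_0_compat; lra).
  apply Rmult_le_compat_l; [apply Rdiv_le_0_compat; lra|].
  rewrite vnorm_pow2, Hi1. destruct (on_sphere k t Hk ltac:(lra)) as [Hk1 _].
  apply vnorm_tangent_part_le; auto.
Qed.

Lemma dist_sum_pow2_le i t : (i < N)%nat ->
  (rsum (fun k => vnorm (vsub (x k t) (x i t))) N)^2 <= INR N * potential t.
Proof.
  intros Hi. pose proof INR_N_pos.
  eapply Rle_trans; [apply rsum_pow2_le|]. apply Rmult_le_compat_l; [lra|].
  unfold potential. rewrite (rsum_swap (fun k l => dot (vsub (x k t) (x l t)) (vsub (x k t) (x l t)))).
  eapply Rle_trans; [|apply (rsum_ge_term (fun l => rsum (fun k => dot (vsub (x k t) (x l t))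
                                                        (vsub (x k t) (x l t))) N) N i); auto].
  - right. apply rsum_ext. intros. apply vnorm_pow2.
  - intros; apply rsum_nonneg; intros; apply dot_self_ge0.
Qed.

Lemma vnorm_sigma_force_le i t : (i < N)%nat -> 0 < t ->
  vnorm (sigma_force i t) <= sqrt (2 * sigma) * sqrt NE0.
Proof.
  intros Hi Ht. pose proof INR_N_pos. pose proof NE0_nonneg.
  set (A := rsum (fun k => vnorm (vsub (x k t) (x i t))) N).
  assert (HA : 0 <= A) by (apply rsum_nonneg; intros; apply vnorm_ge0).
  assert (Hs : 0 <= sigma / INR N) by (apply Rdiv_le_0_compat; lra).
  eapply Rle_trans; [apply vnorm_sigma_force_le_dist; auto|]. fold A.
  rewrite <- sqrt_mult by lra.
  rewrite <- (sqrt_pow2 (sigma / INR N * A)) by (apply Rmult_le_pos; lra).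
  apply sqrt_le_1_alt.
  destruct (kinetic_potential_le t Ht) as [_ Hpot].
  pose proof (dist_sum_pow2_le i t Hi) as HA2. fold A in HA2.
  replace ((sigma / INR N * A) ^ 2) with (sigma / INR N * (sigma / INR N * A ^ 2)) by ring.
  replace (2 * sigma * NE0) with (sigma / INR N * (2 * INR N * NE0)) by (field; lra).
  apply Rmult_le_compat_l; [lra|].
  eapply Rle_trans; [apply Rmult_le_compat_l; [exact Hs | exact HA2]|].
  replace (sigma / INR N * (INR N * potential t)) with (sigma * potential t) by (field; lra).
  exact Hpot.
Qed.

Definition misalign_vec i j s := vsub (rot_formula (x j s) (x i s) (v j s)) (v i s).

Definition drot_along i j t :=
  vadd (drot_regular (x j t) (x i t) (v j t) (v j t) (v i t))
       (drot_singular (x j t) (x i t) (v j t) (v j t) (v i t)).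

Definition misalign_vec_rate i j t :=
  vsub (vadd (rot_formula (x j t) (x i t) (accel N sigma psi x v j t)) (drot_along i j t))
       (accel N sigma psi x v i t).

Lemma misalign_eq i j s : (i < N)%nat -> (j < N)%nat -> 0 <= s ->
  misalign x v i j s = dot (misalign_vec i j s) (misalign_vec i j s).
Proof.
  intros Hi Hj Hs.
  destruct (on_sphere i s Hi Hs) as [Hi1 _]. destruct (on_sphere j s Hj Hs) as [Hj1 _].
  unfold misalign, misalign_vec. rewrite rot_eq_formula, vnorm_pow2; auto.
Qed.

Lemma misalign_derive i j t : (i < N)%nat -> (j < N)%nat -> 0 < t ->
  is_derive (misalign x v i j) t (2 * dot (misalign_vec i j t) (misalign_vec_rate i j t)).
Proof.
  intros Hi Hj Ht.
  destruct (on_sphere i t Hi ltac:(lra)) as [Hi1 _]. destruct (on_sphere j t Hj ltac:(lra)) as [Hj1 _].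
  assert (Hc : 1 + dot (x j t) (x i t) <> 0)
    by (apply unit_one_add_dot_neq0; auto; apply Hopp; auto; lra).
  apply (is_derive_ext_loc (fun s => dot (misalign_vec i j s) (misalign_vec i j s))).
  - exists (mkposreal t Ht). intros s Hs. apply ball_Rabs, Rabs_def2 in Hs.
    unfold minus, plus, opp in Hs; simpl in Hs.
    symmetry. apply misalign_eq; auto. lra.
  - eapply is_derive_value.
    + apply is_derive_dot; unfold misalign_vec, misalign_vec_rate, drot_along;
        apply is_derive_vec_sub; auto using is_derive_vec_v;
        apply rot_formula_derive; auto using is_derive_vec_x, is_derive_vec_v.
    + change (dot (misalign_vec_rate i j t) (misalign_vec i j t) + dot (misalign_vec i j t) (misalign_vec_rate i j t)
        = 2 * dot (misalign_vec i j t) (misalign_vec_rate i j t)).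
      rewrite (dot_comm (misalign_vec_rate i j t)). ring.
Qed.

Lemma dot_misalign_vec_rate i j t : (i < N)%nat -> (j < N)%nat -> 0 < t ->
  let D := misalign_vec i j t in
  dot D (misalign_vec_rate i j t) =
    dot D (rot_formula (x j t) (x i t) (align_force j t))
    + dot D (rot_formula (x j t) (x i t) (sigma_force j t)) + dot D (drot_along i j t)
    - dot D (align_force i t) - dot D (sigma_force i t).
Proof.
  intros Hi Hj Ht D.
  destruct (on_sphere i t Hi ltac:(lra)) as [Hi1 Hi2]. destruct (on_sphere j t Hj ltac:(lra)) as [Hj1 Hj2].
  (* the centripetal terms are along x_i = R(x_j,x_i) x_j, which is orthogonal to D *)
  assert (HDx : dot D (x i t) = 0).
  { unfold D, misalign_vec. rewrite dot_comm, dot_sub_r, rot_formula_dot_base by auto. lra. }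
  unfold misalign_vec_rate. rewrite (accel_split j t), (accel_split i t), !rot_formula_add,
    rot_formula_scal, rot_formula_base by auto.
  rewrite !dot_sub_r, !dot_add_r, !dot_scal_r, HDx. ring.
Qed.

Lemma Rabs_misalign_rate_le i j t : (i < N)%nat -> (j < N)%nat -> 0 < t ->
  let V := sqrt NE0 in
  Rabs (dot (misalign_vec i j t) (misalign_vec_rate i j t))
  <= 8 * maxpsi N psi x t * V^2 + 4 * sqrt (2 * sigma) * V^2 + 12 * V^3
     + 32 * V^3 / vnorm (vadd (x i t) (x j t)).
Proof.
  intros Hi Hj Ht V.
  destruct (on_sphere i t Hi ltac:(lra)) as [Hi1 Hi2]. destruct (on_sphere j t Hj ltac:(lra)) as [Hj1 Hj2].
  assert (Hc : 0 < 1 + dot (x j t) (x i t))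
    by (apply unit_one_add_dot_pos; auto; apply Hopp; auto; lra).
  assert (HR : forall w, vnorm (rot_formula (x j t) (x i t) w) = vnorm w)
    by (intros; apply rot_formula_vnorm; auto; lra).
  pose proof (vnorm_v_le i t Hi Ht) as Hvi. pose proof (vnorm_v_le j t Hj Ht) as Hvj. fold V in Hvi, Hvj.
  assert (HD : vnorm (misalign_vec i j t) <= 2 * V).
  { unfold misalign_vec. eapply Rle_trans; [apply vnorm_sub|]. rewrite HR. lra. }
  assert (Hdrot : vnorm (drot_along i j t) <= 6 * V^2 + 16 * V^2 / vnorm (vadd (x i t) (x j t))).
  { apply vnorm_add_le; [apply drot_regular_bound | apply drot_singular_bound]; auto. }
  pose proof (vnorm_align_force_le i t Hi Ht) as HFi. pose proof (vnorm_align_force_le j t Hj Ht) as HFj.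
  pose proof (vnorm_sigma_force_le i t Hi Ht) as HSi. pose proof (vnorm_sigma_force_le j t Hj Ht) as HSj.
  fold V in HFi, HFj, HSi, HSj.
  rewrite dot_misalign_vec_rate by auto.
  eapply Rle_trans; [apply Rabs_add3_sub2_le|].
  eapply Rle_trans.
  { repeat apply Rplus_le_compat; eapply (Rabs_dot_le _ _ _ _ HD); rewrite ?HR; eassumption. }
  right. unfold Rdiv. ring.
Qed.

Hypothesis Hpsi0 : 0 < psi 0.

Definition misalign_const := 64 + 8 * sqrt (2 * sigma) / psi 0.

Lemma misalign_derive_bound i j t : (i < N)%nat -> (j < N)%nat -> 0 < t ->
  ex_derive (misalign x v i j) t /\
  Rabs (Derive (misalign x v i j) t)
    <= misalign_const * (NE0 * sqrt NE0 + NE0 * sqrt NE0 / vnorm (vadd (x i t) (x j t))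
                         + maxpsi N psi x t * NE0).
Proof.
  intros Hi Hj Ht.
  pose proof (misalign_derive i j t Hi Hj Ht) as Hd.
  split; [eexists; exact Hd|].
  rewrite (is_derive_unique _ _ _ Hd), Rabs_mult, Rabs_right by lra.
  pose proof (Rabs_misalign_rate_le i j t Hi Hj Ht) as Hb. cbv zeta in Hb.
  set (V := sqrt NE0) in *. set (M := maxpsi N psi x t) in *.
  set (q := sqrt (2 * sigma)) in *. set (s := vnorm (vadd (x i t) (x j t))) in *.
  assert (HV : 0 <= V) by apply sqrt_pos.
  assert (HVV : V * V = NE0) by (apply sqrt_sqrt, NE0_nonneg).
  assert (Hq : 0 <= q) by apply sqrt_pos.
  assert (HM : psi 0 <= M) by apply psi0_le_maxpsi.
  assert (Hs : 0 < s).
  { destruct (on_sphere i t Hi ltac:(lra)) as [Hi1 _]. destruct (on_sphere j t Hj ltac:(lra)) as [Hj1 _].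
    apply unit_vnorm_add_pos, unit_one_add_dot_pos; auto. apply Hopp; auto; lra. }
  (* absorbs the sigma-force term into max psi * NE0, using max psi >= psi 0 > 0 *)
  assert (HqM : q * (V * V) <= q / psi 0 * M * (V * V)).
  { apply Rmult_le_compat_r; [nra|].
    replace (q / psi 0 * M) with (q + q * (M - psi 0) / psi 0) by (field; lra).
    assert (0 <= q * (M - psi 0) / psi 0) by (apply Rdiv_le_0_compat; [apply Rmult_le_pos|]; lra). lra. }
  rewrite <- HVV. unfold misalign_const. fold q.
  replace (V * V * V / s) with (V ^ 3 / s) by (unfold Rdiv; ring).
  assert (0 <= V ^ 3 / s) by (apply Rdiv_le_0_compat; auto; apply pow_le; auto).
  assert (0 <= q / psi 0) by (apply Rdiv_le_0_compat; lra).
  assert (0 <= q / psi 0 * (V * V * V)) by (apply Rmult_le_pos; auto; apply Rmult_le_pos; nra).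
  assert (0 <= q / psi 0 * (V ^ 3 / s)) by (apply Rmult_le_pos; auto).
  assert (0 <= M * (V * V)) by (apply Rmult_le_pos; nra).
  replace (8 * q / psi 0) with (8 * (q / psi 0)) by (unfold Rdiv; ring).
  replace (V ^ 2) with (V * V) in Hb by ring. replace (V ^ 3) with (V * V * V) in Hb by ring.
  nra.
Qed.

End Dynamics.

Lemma admissible_psi_pos0 psi : admissible_psi psi -> 0 < psi 0.
Proof.
  intros [dpsi [Hd [_ [_ [Hdec [H2 Hd2]]]]]].
  (* psi'(2) < 0 and psi(2) = 0 force psi > 0 just left of 2; psi decreasing then gives psi(0) > 0 *)
  assert (Hev : within (fun r => in02 r /\ r <> 2) (locally 2) (fun r => (psi r - psi 2) / (r - 2) < 0))
    by (apply (filterlim_lt_eventually _ (dpsi 2)); auto; apply Hd; unfold in02; lra).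
  apply locally_Rabs in Hev. destruct Hev as [d [Hd0 Hev]].
  set (r := 2 - Rmin (d/2) 1).
  assert (0 < Rmin (d/2) 1) by (apply Rmin_glb_lt; lra).
  pose proof (Rmin_l (d/2) 1). pose proof (Rmin_r (d/2) 1).
  assert (Hr : in02 r /\ r <> 2) by (unfold in02, r; lra).
  specialize (Hev r ltac:(unfold r; rewrite Rabs_left; lra) Hr).
  rewrite H2, Rminus_0_r in Hev.
  assert (0 < psi r).
  { apply Rnot_le_lt. intros Hle.
    assert (0 <= psi r / (r - 2)).
    { replace (psi r / (r - 2)) with ((- psi r) * / (- (r - 2))) by (field; unfold r; lra).
      apply Rmult_le_pos; [lra | left; apply Rinv_0_lt_compat; unfold r; lra]. }
    lra. }
  assert (psi r <= psi 0) by (apply Hdec; unfold in02, r in *; lra). lra.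
Qed.

Theorem lemma4p3 (sigma : R) (psi : R -> R) :
  0 <= sigma ->
  admissible_psi psi ->
  exists C : R, 0 < C /\
  forall (N : nat) (x v : nat -> R -> vec),
    (1 <= N)%nat ->
    is_solution N sigma psi x v ->
    (forall i, (i < N)%nat -> vnorm (x i 0) = 1 /\ dot (v i 0) (x i 0) = 0) ->
    (forall i j t, (i < N)%nat -> (j < N)%nat -> 0 <= t ->
       psiij psi x i j t = psiij psi x j i t) ->
    (forall i j t, (i < N)%nat -> (j < N)%nat -> 0 <= t ->
       x i t <> vopp (x j t)) ->
    forall i j t, (i < N)%nat -> (j < N)%nat -> 0 < t ->
      let NE := INR N * energy N sigma x v 0 in
      ex_derive (misalign x v i j) t /\
      Rabs (Derive (misalign x v i j) t)
        <= C * (NE * sqrt NE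
                + NE * sqrt NE / vnorm (vadd (x i t) (x j t))
                + maxpsi N psi x t * NE).
Proof.
  intros Hsigma Hadm.
  pose proof (admissible_psi_pos0 psi Hadm) as Hpsi0.
  destruct Hadm as [dpsi [_ [_ [Hnonneg [Hdecr _]]]]].
  exists (misalign_const sigma psi). split.
  - unfold misalign_const.
    assert (0 <= sqrt (2 * sigma) / psi 0) by (apply Rdiv_le_0_compat; [apply sqrt_pos | lra]). lra.
  - intros N x v HN Hsol Hinit Hsym Hopp i j t Hi Hj Ht.
    exact (misalign_derive_bound N sigma psi x v HN Hsol Hinit Hopp Hsym Hnonneg Hdecr Hsigma Hpsi0
             i j t Hi Hj Ht).
Qed.
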